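(* There is an arithmetical comprehension term $\mathsf{disj}(X,Y)$ such that $\mathsf{ACA}_0$ proves, for all linear orders $\alpha,\beta$: (1) $\mathsf{disj}(\alpha,\beta)$ is a linear order; (2) $\mathsf{WO}(\mathsf{disj}(\alpha,\beta))\leftrightarrow\mathsf{WO}(\alpha)\vee\mathsf{WO}(\beta)$; (3) if there is an infinite descending chain $b_0\succ_\beta b_1\succ_\beta\cdots$ in $\beta$, then there is an embedding (order-preserving map) $f\colon\alpha\to\mathsf{disj}(\alpha,\beta)$.
   Context: Linear orders are pairs $\alpha=\langle D_\alpha,\prec_\alpha\rangle$ with $D_\alpha\subseteq\mathbb N$ and $\prec_\alpha$ a strict linear order on $D_\alpha$; $\mathsf{WO}(\alpha)$ says $\alpha$ is well-ordered. An arithmetical comprehension term is a term $\{x:\theta(x,X,Y)\}$ with $\theta$ arithmetical, whose existence is guaranteed by arithmetical comprehension. *)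

(* Syntax and Henkin semantics of second-order arithmetic,
   models of ACA_0, and the notions LO / WO / descending sequence / embedding
   interpreted inside such a model.  "ACA_0 proves phi" is rendered
   semantically (Goedel completeness): phi holds in every model of ACA_0. *)
From Stdlib Require Import List.
Import ListNotations.

(* ---------- syntax of L_2 (de Bruijn indices; number and set variables
   are separate sorts) ---------- *)
Inductive term : Type :=
| tvar  : nat -> term
| tzero : term
| tone  : term
| tadd  : term -> term -> term
| tmul  : term -> term -> term.

Inductive formula : Type :=
| feq   : term -> term -> formula
| flt   : term -> term -> formula
| fmem  : term -> nat -> formula        (* t \in X_i *)
| fneg  : formula -> formula
| fand  : formula -> formula -> formula
| f_or  : formula -> formula -> formula
| fimp  : formula -> formula -> formula
| fall  : formula -> formula
| fex   : formula -> formula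
| fallS : formula -> formula
| fexS  : formula -> formula.

Fixpoint arithmetical (f : formula) : Prop :=
  match f with
  | feq _ _ | flt _ _ | fmem _ _ => True
  | fneg g | fall g | fex g => arithmetical g
  | fand g h | f_or g h | fimp g h => arithmetical g /\ arithmetical h
  | fallS _ | fexS _ => False
  end.

Record L2str : Type := {
  Mc : Type;
  Sc : Type;
  zero : Mc;
  one : Mc;
  add : Mc -> Mc -> Mc;
  mul : Mc -> Mc -> Mc;
  lt : Mc -> Mc -> Prop;
  mem : Mc -> Sc -> Prop
}.

Definition scons {A : Type} (a : A) (e : nat -> A) : nat -> A :=
  fun n => match n with 0 => a | S k => e k end.

Section Semantics.
Variable A : L2str.

Fixpoint tev (e : nat -> Mc A) (t : term) : Mc A :=
  match t with
  | tvar n => e n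
  | tzero => zero A
  | tone => one A
  | tadd u v => add A (tev e u) (tev e v)
  | tmul u v => mul A (tev e u) (tev e v)
  end.

Fixpoint fev (e : nat -> Mc A) (s : nat -> Sc A) (f : formula) : Prop :=
  match f with
  | feq u v => tev e u = tev e v
  | flt u v => lt A (tev e u) (tev e v)
  | fmem u i => mem A (tev e u) (s i)
  | fneg g => ~ fev e s g
  | fand g h => fev e s g /\ fev e s h
  | f_or g h => fev e s g \/ fev e s h
  | fimp g h => fev e s g -> fev e s h
  | fall g => forall m : Mc A, fev (scons m e) s g
  | fex g => exists m : Mc A, fev (scons m e) s g
  | fallS g => forall X : Sc A, fev e (scons X s) g
  | fexS g => exists X : Sc A, fev e (scons X s) g
  end.

(* ---------- ACA_0 (Simpson, Def. I.2.4 basic axioms + induction axiom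
   + arithmetical comprehension scheme) ---------- *)
Definition ACA0 : Prop :=
  (forall m, add A m (one A) <> zero A) /\
  (forall m n, add A m (one A) = add A n (one A) -> m = n) /\
  (forall m, add A m (zero A) = m) /\
  (forall m n, add A m (add A n (one A)) = add A (add A m n) (one A)) /\
  (forall m, mul A m (zero A) = zero A) /\
  (forall m n, mul A m (add A n (one A)) = add A (mul A m n) m) /\
  (forall m, ~ lt A m (zero A)) /\
  (forall m n, lt A m (add A n (one A)) <-> (lt A m n \/ m = n)) /\
  (forall X : Sc A, mem A (zero A) X ->
      (forall n, mem A n X -> mem A (add A n (one A)) X) ->
      forall n, mem A n X) /\
  (forall (phi : formula) (e : nat -> Mc A) (s : nat -> Sc A),
      arithmetical phi ->
      exists X : Sc A, forall m, mem A m X <-> fev (scons m e) s phi).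

Definition pair (i j : Mc A) : Mc A :=
  add A (mul A (add A i j) (add A i j)) i.

Definition IsLO (D R : Sc A) : Prop :=
  (forall x y, mem A (pair x y) R -> mem A x D /\ mem A y D) /\
  (forall x, ~ mem A (pair x x) R) /\
  (forall x y z, mem A (pair x y) R -> mem A (pair y z) R -> mem A (pair x z) R) /\
  (forall x y, mem A x D -> mem A y D ->
      mem A (pair x y) R \/ x = y \/ mem A (pair y x) R).

Definition DescSeq (D R : Sc A) : Prop :=
  exists F : Sc A,
    (forall n, exists m, mem A (pair n m) F /\ mem A m D) /\
    (forall n m m', mem A (pair n m) F -> mem A (pair n m') F -> m = m') /\
    (forall n m m', mem A (pair n m) F -> mem A (pair (add A n (one A)) m') F ->
        mem A (pair m' m) R).

Definition WO (D R : Sc A) : Prop := IsLO D R /\ ~ DescSeq D R.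

Definition Embedding (D1 R1 D2 R2 : Sc A) : Prop :=
  exists F : Sc A,
    (forall x, mem A x D1 -> exists y, mem A (pair x y) F /\ mem A y D2) /\
    (forall x y y', mem A x D1 -> mem A (pair x y) F -> mem A (pair x y') F -> y = y') /\
    (forall x x' y y', mem A x D1 -> mem A x' D1 ->
        mem A (pair x y) F -> mem A (pair x' y') F ->
        mem A (pair x x') R1 -> mem A (pair y y') R2).

(* X is the set {x : theta(x, D_alpha, R_alpha, D_beta, R_beta)}:
   number variable 0 (and, by convention, every other free number variable)
   denotes x; set variables 0,1,2,3 denote D_alpha, R_alpha, D_beta, R_beta
   (free set variables >= 4 also denote D_alpha). *)
Definition params (Da Ra Db Rb : Sc A) : nat -> Sc A :=
  fun i => nth i [Da; Ra; Db; Rb] Da.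

Definition defines (theta : formula) (Da Ra Db Rb X : Sc A) : Prop :=
  forall x : Mc A, mem A x X <-> fev (fun _ => x) (params Da Ra Db Rb) theta.

End Semantics.

(* disj(alpha, beta) is the Kleene-Brouwer ordering of the tree T of finite
   sequences of pairs (a_0, b_0), ..., (a_n, b_n) descending in alpha and in
   beta at once. An infinite descending sequence in the KB ordering of T
   converges entrywise to an infinite path through T, i.e. to a descending
   sequence in alpha together with one in beta; conversely a descending
   sequence in alpha is carried to disj(alpha, beta) by the following embedding.
   Given b_0 > b_1 > ... in beta, an element a of alpha is sent to the
   sequence of its records r_0 < r_1 < ... < r_k = a (the elements above a
   that lie below all numerically smaller ones, so r_0 > r_1 > ... in alpha),
   paired with b_0, ..., b_k. For a < a' in alpha the two lists agree up to the
   least number t with a <= t < a', which is a record of a only, so the KB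
   comparison is decided there. Everything is carried out inside an arbitrary
   model of ACA_0, with finite sequences coded by Goedel's beta function. *)
From Stdlib Require Import List Classical Setoid Ring.
Import ListNotations.

(** * Uniformly definable predicates *)

Fixpoint term_rename (r : nat -> nat) (t : term) : term :=
  match t with
  | tvar n => tvar (r n)
  | tzero => tzero
  | tone => tone
  | tadd u v => tadd (term_rename r u) (term_rename r v)
  | tmul u v => tmul (term_rename r u) (term_rename r v)
  end.

Definition rename_up (r : nat -> nat) : nat -> nat :=
  fun n => match n with 0 => 0 | S k => S (r k) end.

Fixpoint formula_rename (r : nat -> nat) (f : formula) : formula :=
  match f with
  | feq u v => feq (term_rename r u) (term_rename r v)
  | flt u v => flt (term_rename r u) (term_rename r v)
  | fmem u i => fmem (term_rename r u) i
  | fneg g => fneg (formula_rename r g)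
  | fand g h => fand (formula_rename r g) (formula_rename r h)
  | f_or g h => f_or (formula_rename r g) (formula_rename r h)
  | fimp g h => fimp (formula_rename r g) (formula_rename r h)
  | fall g => fall (formula_rename (rename_up r) g)
  | fex g => fex (formula_rename (rename_up r) g)
  | fallS g => fallS (formula_rename r g)
  | fexS g => fexS (formula_rename r g)
  end.

Lemma tev_rename (A : L2str) r e t :
  tev A e (term_rename r t) = tev A (fun n => e (r n)) t.
Proof. induction t; simpl; congruence. Qed.

Lemma tev_ext (A : L2str) e e' t : (forall n, e n = e' n) -> tev A e t = tev A e' t.
Proof. intro H; induction t; simpl; congruence. Qed.

Lemma fev_ext (A : L2str) phi : forall e e' s, (forall n, e n = e' n) ->
  (fev A e s phi <-> fev A e' s phi).
Proof.
  induction phi; intros e e' s H; simpl;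
    rewrite ?(tev_ext A e e' _ H), ?(IHphi e e' s H), ?(IHphi1 e e' s H), ?(IHphi2 e e' s H);
    try tauto.
  - split; intros H1 m; (eapply IHphi; [|apply H1]); intros [|n]; simpl; auto.
  - split; intros [m H1]; exists m; (eapply IHphi; [|apply H1]); intros [|n]; simpl; auto.
  - split; intros H1 X; (eapply IHphi; [|apply H1]); auto.
  - split; intros [X H1]; exists X; (eapply IHphi; [|apply H1]); auto.
Qed.

Lemma fev_rename (A : L2str) phi : forall r e s,
  fev A e s (formula_rename r phi) <-> fev A (fun n => e (r n)) s phi.
Proof.
  induction phi; intros r e s; simpl; rewrite ?tev_rename, ?IHphi, ?IHphi1, ?IHphi2; try tauto.
  - split; intros H m; specialize (H m); rewrite IHphi in *;
      (eapply fev_ext; [|apply H]); intros [|n]; simpl; auto.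
  - split; intros [m H]; exists m; rewrite IHphi in *;
      (eapply fev_ext; [|apply H]); intros [|n]; simpl; auto.
  - split; intros H X; specialize (H X); rewrite IHphi in *; auto.
  - split; intros [X H]; exists X; rewrite IHphi in *; auto.
Qed.

Lemma arithmetical_rename r phi : arithmetical phi -> arithmetical (formula_rename r phi).
Proof. revert r; induction phi; simpl; intros r H; try tauto; try (destruct H; split); eauto. Qed.

Definition Definable (P : forall A : L2str, (nat -> Mc A) -> (nat -> Sc A) -> Prop) :=
  exists phi, arithmetical phi /\ forall A e s, P A e s <-> fev A e s phi.

Definition TermDefinable (f : forall A : L2str, (nat -> Mc A) -> Mc A) :=
  exists t, forall A e, f A e = tev A e t.

Lemma termdef_var n : TermDefinable (fun A e => e n).
Proof. exists (tvar n); reflexivity. Qed.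

Lemma termdef_zero : TermDefinable (fun A e => zero A).
Proof. exists tzero; reflexivity. Qed.

Lemma termdef_one : TermDefinable (fun A e => one A).
Proof. exists tone; reflexivity. Qed.

Lemma termdef_add f g : TermDefinable f -> TermDefinable g ->
  TermDefinable (fun A e => add A (f A e) (g A e)).
Proof. intros [t Ht] [u Hu]; exists (tadd t u); intros; simpl; rewrite Ht, Hu; auto. Qed.

Lemma termdef_mul f g : TermDefinable f -> TermDefinable g ->
  TermDefinable (fun A e => mul A (f A e) (g A e)).
Proof. intros [t Ht] [u Hu]; exists (tmul t u); intros; simpl; rewrite Ht, Hu; auto. Qed.

Lemma definable_eq f g : TermDefinable f -> TermDefinable g ->
  Definable (fun A e s => f A e = g A e).
Proof. intros [t Ht] [u Hu]; exists (feq t u); split; [exact I|]; intros; simpl; rewrite Ht, Hu; tauto. Qed.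

Lemma definable_lt f g : TermDefinable f -> TermDefinable g ->
  Definable (fun A e s => lt A (f A e) (g A e)).
Proof. intros [t Ht] [u Hu]; exists (flt t u); split; [exact I|]; intros; simpl; rewrite Ht, Hu; tauto. Qed.

Lemma definable_mem i f : TermDefinable f -> Definable (fun A e s => mem A (f A e) (s i)).
Proof. intros [t Ht]; exists (fmem t i); split; [exact I|]; intros; simpl; rewrite Ht; tauto. Qed.

Lemma definable_false : Definable (fun A e s => False).
Proof. exists (fneg (feq tzero tzero)); split; [exact I|]; intros; simpl; tauto. Qed.

Lemma definable_and P Q : Definable P -> Definable Q ->
  Definable (fun A e s => P A e s /\ Q A e s).
Proof. intros [p [Hp1 Hp]] [q [Hq1 Hq]]; exists (fand p q); split; [split; auto|]; intros; simpl; rewrite Hp, Hq; tauto. Qed.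

Lemma definable_or P Q : Definable P -> Definable Q ->
  Definable (fun A e s => P A e s \/ Q A e s).
Proof. intros [p [Hp1 Hp]] [q [Hq1 Hq]]; exists (f_or p q); split; [split; auto|]; intros; simpl; rewrite Hp, Hq; tauto. Qed.

Lemma definable_imp P Q : Definable P -> Definable Q ->
  Definable (fun A e s => P A e s -> Q A e s).
Proof. intros [p [Hp1 Hp]] [q [Hq1 Hq]]; exists (fimp p q); split; [split; auto|]; intros; simpl; rewrite Hp, Hq; tauto. Qed.

Lemma definable_all (P : forall A : L2str, Mc A -> (nat -> Mc A) -> (nat -> Sc A) -> Prop) :
  Definable (fun A e s => P A (e 0) (fun n => e (S n)) s) ->
  Definable (fun A e s => forall m, P A m e s).
Proof.
  intros [p [Hp1 Hp]]; exists (fall p); split; auto; intros A e s; simpl.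
  split; intros H m; apply (Hp A (scons m e) s), H.
Qed.

Lemma definable_ex (P : forall A : L2str, Mc A -> (nat -> Mc A) -> (nat -> Sc A) -> Prop) :
  Definable (fun A e s => P A (e 0) (fun n => e (S n)) s) ->
  Definable (fun A e s => exists m, P A m e s).
Proof.
  intros [p [Hp1 Hp]]; exists (fex p); split; auto; intros A e s; simpl.
  split; intros [m H]; exists m; apply (Hp A (scons m e) s), H.
Qed.

Lemma definable_rename P r : Definable P -> Definable (fun A e s => P A (fun n => e (r n)) s).
Proof.
  intros [p [Hp1 Hp]]; exists (formula_rename r p); split; [apply arithmetical_rename; auto|].
  intros; rewrite fev_rename, Hp; tauto.
Qed.

Ltac solve_termdef := first
  [ apply termdef_var | apply termdef_zero | apply termdef_one
  | apply termdef_add; solve_termdef | apply termdef_mul; solve_termdef ].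

Ltac solve_definable := cbv beta delta -[Definable TermDefinable]; first
  [ apply definable_false
  | apply definable_and; solve_definable | apply definable_or; solve_definable
  | apply definable_imp; solve_definable
  | apply definable_all; solve_definable | apply definable_ex; solve_definable
  | apply definable_eq; solve_termdef | apply definable_lt; solve_termdef
  | apply definable_mem; solve_termdef ].

Lemma definable_induction (P : forall A : L2str, Mc A -> (nat -> Mc A) -> (nat -> Sc A) -> Prop) :
  Definable (fun A e s => P A (e 0) (fun n => e (S n)) s) ->
  forall A, ACA0 A -> forall e s, P A (zero A) e s ->
  (forall n, P A n e s -> P A (add A n (one A)) e s) -> forall n, P A n e s.
Proof.
  intros [p [Hp1 Hp]] A HA e s H0 HS.
  destruct HA as [_ [_ [_ [_ [_ [_ [_ [_ [Hind Hcomp]]]]]]]]].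
  destruct (Hcomp p e s Hp1) as [X HX].
  assert (HX' : forall m, mem A m X <-> P A m e s).
  { intro m. rewrite HX. symmetry. apply (Hp A (scons m e) s). }
  intro n. apply HX', Hind; [apply HX'; auto|].
  intros k Hk. apply HX', HS, HX', Hk.
Qed.

Lemma definable_comprehension (P : forall A : L2str, Mc A -> (nat -> Mc A) -> (nat -> Sc A) -> Prop) :
  Definable (fun A e s => P A (e 0) (fun n => e (S n)) s) ->
  forall A, ACA0 A -> forall e s, exists X, forall m, mem A m X <-> P A m e s.
Proof.
  intros [p [Hp1 Hp]] A HA e s.
  destruct HA as [_ [_ [_ [_ [_ [_ [_ [_ [_ Hcomp]]]]]]]]].
  destruct (Hcomp p e s Hp1) as [X HX].
  exists X. intro m. rewrite HX. symmetry. apply (Hp A (scons m e) s).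
Qed.

(** * Coded notions *)

(* Every notion below is stated for an arbitrary structure, so that it can be
   used inside the induction and comprehension instances of [Definable]. *)
Definition le (A : L2str) (x y : Mc A) := lt A x y \/ x = y.
Definition is_rem (A : L2str) (x m v : Mc A) := exists q, x = add A (mul A q m) v /\ lt A v m.
Definition divides (A : L2str) (a b : Mc A) := exists k, b = mul A k a.
Definition unit_mod (A : L2str) (q m : Mc A) :=
  exists u k, mul A q u = add A (mul A k m) (one A).

(* Goedel's beta function: [pair n (pair c d)] codes the sequence of length [n]
   whose [i]-th entry is the remainder of [c] modulo [1 + (i+1) d]. *)
Definition beta_mod (A : L2str) (d i : Mc A) := add A (one A) (mul A (add A i (one A)) d).
Definition code_len (A : L2str) (x n : Mc A) := exists c d, x = pair A n (pair A c d).
Definition code_at (A : L2str) (x i v : Mc A) :=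
  exists n c d, x = pair A n (pair A c d) /\ is_rem A c (beta_mod A d i) v.

(* Chinese remaindering after [n] of the [N] steps: [c] has the prescribed
   remainders below [n], and [Q] is divisible by the moduli below [n] and
   invertible modulo the others. *)
Definition crt_invariant (A : L2str) (N d : Mc A) (G : Sc A) (n c Q : Mc A) :=
  (forall i v, lt A i n -> mem A (pair A i v) G -> is_rem A c (beta_mod A d i) v) /\
  (forall i, lt A i n -> divides A (beta_mod A d i) Q) /\
  (forall j, le A n j -> lt A j N -> unit_mod A Q (beta_mod A d j)).

Definition code_eqv (A : L2str) (x y : Mc A) := exists n, code_len A x n /\ code_len A y n /\
  forall i, lt A i n -> forall v, code_at A x i v -> code_at A y i v.

Definition canonical (A : L2str) (x : Mc A) :=
  (exists n, code_len A x n) /\ forall y, lt A y x -> ~ code_eqv A y x.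

(* The Kleene-Brouwer order, entries being compared as numbers: [x] is below
   [y] if [y] is a proper initial segment of [x], or if [x] has the smaller
   entry at the first position where they differ. *)
Definition kb_lt (A : L2str) (x y : Mc A) := exists n m, code_len A x n /\ code_len A y m /\
  ((lt A m n /\ forall i v, lt A i m -> code_at A y i v -> code_at A x i v) \/
   (exists i, lt A i n /\ lt A i m /\
      (forall j v, lt A j i -> code_at A y j v -> code_at A x j v) /\
      exists v w, code_at A x i v /\ code_at A y i w /\ lt A v w)).

Definition disj_node (A : L2str) (Da Ra Db Rb : Sc A) (x : Mc A) :=
  canonical A x /\ exists n, code_len A x n /\ lt A (zero A) n /\
  (forall i v, lt A i n -> code_at A x i v ->
     exists a b, v = pair A a b /\ mem A a Da /\ mem A b Db) /\
  (forall i v w, lt A (add A i (one A)) n -> code_at A x i v -> code_at A x (add A i (one A)) w ->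
     exists a b a' b', v = pair A a b /\ w = pair A a' b' /\
       mem A (pair A a' a) Ra /\ mem A (pair A b' b) Rb).

Definition disj_rel (A : L2str) (Da Ra Db Rb : Sc A) (z : Mc A) :=
  exists x y, z = pair A x y /\ disj_node A Da Ra Db Rb x /\ disj_node A Da Ra Db Rb y /\
    kb_lt A x y.

Definition settled (A : L2str) (F : Sc A) (k N : Mc A) := forall n x n' x',
  le A N n -> le A N n' -> mem A (pair A n x) F -> mem A (pair A n' x') F ->
  (forall l, code_len A x l -> le A k l) /\
  forall j v, lt A j k -> code_at A x' j v -> code_at A x j v.

Definition ord_le (A : L2str) (R : Sc A) (a y : Mc A) := a = y \/ mem A (pair A a y) R.

(* In numerical order the records above
   [a] descend in alpha, and the last one is [a] itself. *)
Definition record (A : L2str) (Da Ra : Sc A) (a y : Mc A) :=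
  mem A y Da /\ ord_le A Ra a y /\
  forall z, lt A z y -> mem A z Da -> ord_le A Ra a z -> mem A (pair A y z) Ra.

Definition record_prefix (A : L2str) (Da Ra Fb : Sc A) (a N x n : Mc A) := code_len A x n /\
  (forall i v, lt A i n -> code_at A x i v -> exists r b, v = pair A r b /\
     mem A (pair A i b) Fb /\ record A Da Ra a r /\ lt A r N) /\
  (forall i v w, lt A (add A i (one A)) n -> code_at A x i v -> code_at A x (add A i (one A)) w ->
     exists r b r' b', v = pair A r b /\ w = pair A r' b' /\ lt A r r') /\
  (forall y, lt A y N -> record A Da Ra a y -> exists i b, lt A i n /\ code_at A x i (pair A y b)).

Definition record_code (A : L2str) (Da Ra Fb : Sc A) (a x : Mc A) := exists n, code_len A x n /\
  (forall i v, lt A i n -> code_at A x i v -> exists r b, v = pair A r b /\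
     mem A (pair A i b) Fb /\ record A Da Ra a r) /\
  (forall i v w, lt A (add A i (one A)) n -> code_at A x i v -> code_at A x (add A i (one A)) w ->
     exists r b r' b', v = pair A r b /\ w = pair A r' b' /\ lt A r r') /\
  (forall y, record A Da Ra a y -> exists i b, lt A i n /\ code_at A x i (pair A y b)).

Section Model.
Variable A : L2str.
Hypothesis HA : ACA0 A.
(* Any set of the model; it only fills unused set variables of environments. *)
Variable X0 : Sc A.

Local Notation M := (Mc A).
Local Infix "⊕" := (add A) (at level 50, left associativity).
Local Infix "⊗" := (mul A) (at level 40, left associativity).
Local Infix "≺" := (lt A) (at level 70).
Local Infix "≼" := (le A) (at level 70).
Local Notation zA := (zero A).
Local Notation oA := (one A).

Definition env (l : list M) : nat -> M := fun k => nth k l zA.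
Definition senv (l : list (Sc A)) : nat -> Sc A := fun k => nth k l X0.

Ltac unfold_env := cbv beta iota delta [env senv nth] in *.
Ltac induct P e s :=
  refine (definable_induction P _ A HA e s _ _); [solve_definable | unfold_env | unfold_env].

(** * Arithmetic in a model of ACA_0 *)

Lemma ax_S_nz m : m ⊕ oA <> zA. Proof. apply HA. Qed.
Lemma ax_S_inj m n : m ⊕ oA = n ⊕ oA -> m = n. Proof. apply HA. Qed.
Lemma ax_add0 m : m ⊕ zA = m. Proof. apply HA. Qed.
Lemma ax_addS m n : m ⊕ (n ⊕ oA) = (m ⊕ n) ⊕ oA. Proof. apply HA. Qed.
Lemma ax_mul0 m : m ⊗ zA = zA. Proof. apply HA. Qed.
Lemma ax_mulS m n : m ⊗ (n ⊕ oA) = m ⊗ n ⊕ m. Proof. apply HA. Qed.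
Lemma ax_lt0 m : ~ m ≺ zA. Proof. apply HA. Qed.
Lemma ax_ltS m n : m ≺ n ⊕ oA <-> m ≺ n \/ m = n. Proof. apply HA. Qed.

Lemma add0l n : zA ⊕ n = n.
Proof.
  revert n. induct (fun A n (e : nat -> Mc A) (s : nat -> Sc A) =>
    add A (zero A) n = n) (env []) (senv []).
  - apply ax_add0.
  - intros n IH. rewrite ax_addS, IH. reflexivity.
Qed.

Lemma addSl m n : (m ⊕ oA) ⊕ n = (m ⊕ n) ⊕ oA.
Proof.
  revert n. induct (fun A n (e : nat -> Mc A) (s : nat -> Sc A) =>
    add A (add A (e 0) (one A)) n = add A (add A (e 0) n) (one A)) (env [m]) (senv []).
  - rewrite !ax_add0. reflexivity.
  - intros n IH. rewrite !ax_addS, IH. reflexivity.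
Qed.

Lemma addC m n : m ⊕ n = n ⊕ m.
Proof.
  revert n. induct (fun A n (e : nat -> Mc A) (s : nat -> Sc A) =>
    add A (e 0) n = add A n (e 0)) (env [m]) (senv []).
  - rewrite ax_add0, add0l. reflexivity.
  - intros n IH. rewrite ax_addS, IH, addSl. reflexivity.
Qed.

Lemma addA m n p : (m ⊕ n) ⊕ p = m ⊕ (n ⊕ p).
Proof.
  revert p. induct (fun A p (e : nat -> Mc A) (s : nat -> Sc A) =>
    add A (add A (e 0) (e 1)) p = add A (e 0) (add A (e 1) p)) (env [m; n]) (senv []).
  - rewrite !ax_add0. reflexivity.
  - intros p IH. rewrite !ax_addS, IH. reflexivity.
Qed.

Lemma mul0l n : zA ⊗ n = zA.
Proof.
  revert n. induct (fun A n (e : nat -> Mc A) (s : nat -> Sc A) =>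
    mul A (zero A) n = zero A) (env []) (senv []).
  - apply ax_mul0.
  - intros n IH. rewrite ax_mulS, IH, ax_add0. reflexivity.
Qed.

Lemma mulSl m n : (m ⊕ oA) ⊗ n = m ⊗ n ⊕ n.
Proof.
  revert n. induct (fun A n (e : nat -> Mc A) (s : nat -> Sc A) =>
    mul A (add A (e 0) (one A)) n = add A (mul A (e 0) n) n) (env [m]) (senv []).
  - rewrite !ax_mul0, ax_add0. reflexivity.
  - intros n IH. rewrite !ax_mulS, IH, !ax_addS. f_equal. rewrite !addA. f_equal. apply addC.
Qed.

Lemma mulC m n : m ⊗ n = n ⊗ m.
Proof.
  revert n. induct (fun A n (e : nat -> Mc A) (s : nat -> Sc A) =>
    mul A (e 0) n = mul A n (e 0)) (env [m]) (senv []).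
  - rewrite ax_mul0, mul0l. reflexivity.
  - intros n IH. rewrite ax_mulS, IH, mulSl. reflexivity.
Qed.

Lemma mulDr m n p : m ⊗ (n ⊕ p) = m ⊗ n ⊕ m ⊗ p.
Proof.
  revert p. induct (fun A p (e : nat -> Mc A) (s : nat -> Sc A) =>
    mul A (e 0) (add A (e 1) p) = add A (mul A (e 0) (e 1)) (mul A (e 0) p)) (env [m; n]) (senv []).
  - rewrite ax_add0, ax_mul0, ax_add0. reflexivity.
  - intros p IH. rewrite ax_addS, !ax_mulS, IH, addA. reflexivity.
Qed.

Lemma mulA m n p : (m ⊗ n) ⊗ p = m ⊗ (n ⊗ p).
Proof.
  revert p. induct (fun A p (e : nat -> Mc A) (s : nat -> Sc A) =>
    mul A (mul A (e 0) (e 1)) p = mul A (e 0) (mul A (e 1) p)) (env [m; n]) (senv []).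
  - rewrite !ax_mul0. reflexivity.
  - intros p IH. rewrite !ax_mulS, IH, mulDr. reflexivity.
Qed.

Lemma mul1l n : oA ⊗ n = n.
Proof. rewrite <- (add0l oA), mulSl, mul0l, add0l. reflexivity. Qed.

Lemma model_semiring : semi_ring_theory zA oA (add A) (mul A) (@eq M).
Proof.
  constructor; intros; rewrite ?addA, ?mulA;
    auto using add0l, addC, mul1l, mul0l, mulC.
  rewrite mulC, mulDr, !(mulC p). reflexivity.
Qed.

Add Ring model_ring : model_semiring.

Lemma add_cancel a b k : a ⊕ k = b ⊕ k -> a = b.
Proof.
  revert k. induct (fun A k (e : nat -> Mc A) (s : nat -> Sc A) =>
    add A (e 0) k = add A (e 1) k -> e 0 = e 1) (env [a; b]) (senv []).
  - rewrite !ax_add0. auto.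
  - intros k IH H. rewrite !ax_addS in H. apply IH, ax_S_inj, H.
Qed.

Lemma add_cancel_l a b k : k ⊕ a = k ⊕ b -> a = b.
Proof. rewrite (addC k a), (addC k b). apply add_cancel. Qed.

Lemma zero_or_S n : n = zA \/ exists k, n = k ⊕ oA.
Proof.
  revert n. induct (fun A n (e : nat -> Mc A) (s : nat -> Sc A) =>
    n = zero A \/ exists k, n = add A k (one A)) (env []) (senv []).
  - auto.
  - intros n _. right. exists n. reflexivity.
Qed.

Lemma add_id a k : a ⊕ k = a -> k = zA.
Proof. intro H. apply (add_cancel_l k zA a). rewrite ax_add0. auto. Qed.

Lemma lt_ex m n : m ≺ n <-> exists k, n = m ⊕ k ⊕ oA.
Proof.
  revert n. induct (fun A n (e : nat -> Mc A) (s : nat -> Sc A) =>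
    lt A (e 0) n <-> exists k, n = add A (add A (e 0) k) (one A)) (env [m]) (senv []).
  - split; [intro H; exfalso; eapply ax_lt0; eauto|].
    intros [k Hk]. exfalso. eapply ax_S_nz. symmetry. eauto.
  - intros n IH. rewrite ax_ltS, IH. split.
    + intros [[k ->]| ->]; [exists (k ⊕ oA) | exists zA]; ring.
    + intros [k Hk]. apply ax_S_inj in Hk.
      destruct (zero_or_S k) as [->|[k' ->]].
      * right. rewrite ax_add0 in Hk. auto.
      * left. exists k'. rewrite Hk. ring.
Qed.

Lemma lt_irr m : ~ m ≺ m.
Proof.
  intro H. apply lt_ex in H. destruct H as [k Hk].
  rewrite addA in Hk. symmetry in Hk. apply add_id in Hk. eapply ax_S_nz; eauto.
Qed.

Lemma lt_trans a b c : a ≺ b -> b ≺ c -> a ≺ c.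
Proof. rewrite !lt_ex. intros [k ->] [l ->]. exists (k ⊕ oA ⊕ l). ring. Qed.

Lemma lt_asym a b : a ≺ b -> ~ b ≺ a.
Proof. intros H1 H2. apply (lt_irr a). eapply lt_trans; eauto. Qed.

Lemma lt_tri m n : m ≺ n \/ m = n \/ n ≺ m.
Proof.
  revert n. induct (fun A n (e : nat -> Mc A) (s : nat -> Sc A) =>
    lt A (e 0) n \/ e 0 = n \/ lt A n (e 0)) (env [m]) (senv []).
  - destruct (zero_or_S m) as [->|[k ->]]; auto.
    right; right. apply lt_ex. exists k. ring.
  - intros n [H|[H|H]].
    + left. apply ax_ltS. auto.
    + left. apply ax_ltS. auto.
    + apply lt_ex in H. destruct H as [k ->].
      destruct (zero_or_S k) as [->|[k' ->]].
      * right; left. ring.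
      * right; right. apply lt_ex. exists k'. ring.
Qed.

Lemma lt_S m : m ≺ m ⊕ oA.
Proof. apply ax_ltS. auto. Qed.

Lemma lt_0S m : zA ≺ m ⊕ oA.
Proof. apply lt_ex. exists m. ring. Qed.

Lemma not_lt0 m : ~ m ≺ zA.
Proof. apply ax_lt0. Qed.

Lemma le_ex m n : m ≼ n <-> exists k, n = m ⊕ k.
Proof.
  unfold le. rewrite lt_ex. split.
  - intros [[k ->]| ->]; [exists (k ⊕ oA) | exists zA]; ring.
  - intros [k ->]. destruct (zero_or_S k) as [->|[k' ->]].
    + right; ring.
    + left. exists k'. ring.
Qed.

Lemma le_refl m : m ≼ m.
Proof. right; auto. Qed.

Lemma le_trans a b c : a ≼ b -> b ≼ c -> a ≼ c.
Proof. rewrite !le_ex. intros [k ->] [l ->]. exists (k ⊕ l). ring. Qed.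

Lemma lt_le a b : a ≺ b -> a ≼ b.
Proof. left; auto. Qed.

Lemma le_lt_trans a b c : a ≼ b -> b ≺ c -> a ≺ c.
Proof. intros [H| ->] H'; auto. eapply lt_trans; eauto. Qed.

Lemma lt_le_trans a b c : a ≺ b -> b ≼ c -> a ≺ c.
Proof. intros H [H'| <-]; auto. eapply lt_trans; eauto. Qed.

Lemma not_lt m n : ~ m ≺ n -> n ≼ m.
Proof. intro H. destruct (lt_tri m n) as [?|[->|?]]; [tauto|right|left]; auto. Qed.

Lemma le_not_lt m n : m ≼ n -> ~ n ≺ m.
Proof. intros [H| ->] H'; [eapply lt_asym | eapply lt_irr]; eauto. Qed.

Lemma lt_succ_le m n : m ≺ n ⊕ oA <-> m ≼ n.
Proof. apply ax_ltS. Qed.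

Lemma lt_le_S m n : m ≺ n <-> m ⊕ oA ≼ n.
Proof. rewrite lt_ex, le_ex. split; intros [k ->]; exists k; ring. Qed.

Lemma le_0 m : zA ≼ m.
Proof. apply le_ex. exists m. ring. Qed.

Lemma le_add_r a k : a ≼ a ⊕ k.
Proof. apply le_ex. eauto. Qed.

Lemma le_add_l a k : a ≼ k ⊕ a.
Proof. apply le_ex. exists k. ring. Qed.

Lemma le_mul_pos a c : zA ≺ c -> a ≼ a ⊗ c.
Proof. rewrite lt_ex. intros [l ->]. apply le_ex. exists (a ⊗ l). ring. Qed.

Lemma pos_mul a b : zA ≺ a -> zA ≺ b -> zA ≺ a ⊗ b.
Proof. rewrite !lt_ex. intros [k ->] [l ->]. exists (k ⊗ l ⊕ k ⊕ l). ring. Qed.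

Lemma least_number (P : forall A : L2str, Mc A -> (nat -> Mc A) -> (nat -> Sc A) -> Prop) :
  Definable (fun A e s => P A (e 0) (fun n => e (S n)) s) ->
  forall e s, (exists n, P A n e s) -> exists n, P A n e s /\ forall m, m ≺ n -> ~ P A m e s.
Proof.
  intros HP e s [n Hn]. apply NNPP. intro Hno.
  assert (Hall : forall n m, m ≺ n -> ~ P A m e s).
  { refine (definable_induction (fun A n e s => forall m, lt A m n -> ~ P A m e s) _ A HA e s _ _).
    - apply definable_all, definable_imp; [apply definable_lt; solve_termdef|].
      apply definable_imp; [|apply definable_false].
      exact (definable_rename _ (fun n => match n with 0 => 0 | S k => S (S k) end) HP).
    - intros m H. exfalso. eapply not_lt0; eauto.
    - intros k IH m Hm. apply lt_succ_le in Hm. destruct Hm as [Hm| ->]; auto.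
      intro Hk. apply Hno. exists k. split; auto. }
  apply (Hall (n ⊕ oA) n); auto. apply lt_S.
Qed.



(** * Division, pairing and sequence codes *)

Lemma divmod m x : zA ≺ m -> exists q r, x = q ⊗ m ⊕ r /\ r ≺ m.
Proof.
  intro Hm. revert x. induct (fun A x (e : nat -> Mc A) (s : nat -> Sc A) =>
    exists q r, x = add A (mul A q (e 0)) r /\ lt A r (e 0)) (env [m]) (senv []).
  - exists zA, zA. split; [ring | auto].
  - intros x [q [r [-> Hr]]]. apply lt_le_S in Hr. destruct Hr as [Hr| Hr].
    + exists q, (r ⊕ oA). split; [ring | auto].
    + exists (q ⊕ oA), zA. split; [rewrite <- Hr; ring | auto].
Qed.

Lemma divmod_uniq m q r q' r' :
  q ⊗ m ⊕ r = q' ⊗ m ⊕ r' -> r ≺ m -> r' ≺ m -> q = q' /\ r = r'.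
Proof.
  assert (Hq : forall q q' r r', q ≺ q' -> q ⊗ m ⊕ r = q' ⊗ m ⊕ r' -> ~ r ≺ m).
  { intros q0 q0' r0 r0' Hq H. apply lt_ex in Hq. destruct Hq as [k ->].
    assert (r0 = k ⊗ m ⊕ r0' ⊕ m) as ->.
    { apply (add_cancel_l _ _ (q0 ⊗ m)). rewrite H. ring. }
    apply le_not_lt, le_add_l. }
  intros H Hr Hr'. destruct (lt_tri q q') as [H1|[<-|H1]].
  - exfalso; eapply Hq; eauto.
  - split; auto. eapply add_cancel_l; eauto.
  - exfalso; eapply Hq; eauto.
Qed.

Lemma is_rem_fun x m v w : is_rem A x m v -> is_rem A x m w -> v = w.
Proof. intros [q [-> Hv]] [q' [H Hw]]. eapply divmod_uniq; eauto. Qed.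

Lemma is_rem_ex x m : zA ≺ m -> exists v, is_rem A x m v.
Proof. intros Hm. destruct (divmod m x Hm) as [q [r [H1 H2]]]. exists r, q. auto. Qed.

Lemma is_rem_add x m v k : is_rem A x m v -> is_rem A (x ⊕ k ⊗ m) m v.
Proof. intros [q [-> Hv]]. exists (q ⊕ k). split; auto. ring. Qed.

Lemma is_rem_adjust c Q m v : v ≺ m -> unit_mod A Q m -> exists t, is_rem A (c ⊕ Q ⊗ t) m v.
Proof.
  intros Hv [u [k HQ]].
  assert (Hm : zA ≺ m) by (eapply le_lt_trans; [apply le_0 | exact Hv]).
  destruct (divmod m c Hm) as [q [r [-> Hr]]].
  apply lt_ex in Hr. destruct Hr as [ρ ->].
  (* adding [Q u (v + ρ + 1)], which is [v + ρ + 1] modulo [m], turns [r] into [v] *)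
  exists (u ⊗ (v ⊕ ρ ⊕ oA)), (q ⊕ k ⊗ (v ⊕ ρ ⊕ oA) ⊕ oA). split; auto.
  transitivity (q ⊗ (r ⊕ ρ ⊕ oA) ⊕ r ⊕ (Q ⊗ u) ⊗ (v ⊕ ρ ⊕ oA)); [ring|].
  rewrite HQ. ring.
Qed.

Lemma unit_mod_mul Q Q' m : unit_mod A Q m -> unit_mod A Q' m -> unit_mod A (Q ⊗ Q') m.
Proof.
  intros [u [k H]] [u' [k' H']]. exists (u ⊗ u'), (k ⊗ k' ⊗ m ⊕ k ⊕ k').
  transitivity ((Q ⊗ u) ⊗ (Q' ⊗ u')); [ring|]. rewrite H, H'. ring.
Qed.

Lemma pair_inj i j i' j' : pair A i j = pair A i' j' -> i = i' /\ j = j'.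
Proof.
  assert (Hs : forall i j i' j', i ⊕ j ≺ i' ⊕ j' -> pair A i j ≺ pair A i' j').
  { clear i j i' j'. intros i j i' j' Hlt. apply lt_le_S, le_ex in Hlt. destruct Hlt as [k Hk].
    apply lt_ex. unfold pair. rewrite Hk.
    exists (j ⊕ (i ⊕ j) ⊕ ((i ⊕ j ⊕ oA) ⊗ k ⊕ k ⊗ (i ⊕ j ⊕ oA) ⊕ k ⊗ k) ⊕ i'). ring. }
  intro H. destruct (lt_tri (i ⊕ j) (i' ⊕ j')) as [H1|[H1|H1]].
  - exfalso. apply Hs in H1. rewrite H in H1. eapply lt_irr; eauto.
  - unfold pair in H. rewrite H1 in H. apply add_cancel_l in H. subst.
    split; auto. eapply add_cancel_l; eauto.
  - exfalso. apply Hs in H1. rewrite H in H1. eapply lt_irr; eauto.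
Qed.

Lemma pair_mono_l i i' j : i ≺ i' -> pair A i j ≺ pair A i' j.
Proof.
  intro H. unfold pair. apply lt_ex in H. destruct H as [k ->].
  apply lt_ex. exists ((i ⊕ j) ⊗ (k ⊕ oA) ⊕ (k ⊕ oA) ⊗ (i ⊕ j) ⊕ (k ⊕ oA) ⊗ (k ⊕ oA) ⊕ k). ring.
Qed.

Lemma pair_comprehension
  (P : forall A : L2str, Mc A -> Mc A -> (nat -> Mc A) -> (nat -> Sc A) -> Prop) :
  Definable (fun A e s => exists i w, e 0 = pair A i w /\ P A i w (fun n => e (S n)) s) ->
  forall e s, exists G, forall i w, mem A (pair A i w) G <-> P A i w e s.
Proof.
  intros HP e s.
  destruct (definable_comprehension (fun A z e s => exists i w, z = pair A i w /\ P A i w e s)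
              HP A HA e s) as [G HG].
  exists G. intros i w. rewrite HG. split.
  - intros [i' [w' [E H]]]. apply pair_inj in E. destruct E; subst. exact H.
  - intros H. exists i, w. auto.
Qed.

Lemma beta_mod_pos d i : zA ≺ beta_mod A d i.
Proof. unfold beta_mod. apply lt_ex. exists ((i ⊕ oA) ⊗ d). ring. Qed.

Lemma code_len_fun x n n' : code_len A x n -> code_len A x n' -> n = n'.
Proof. intros [c [d ->]] [c' [d' H]]. apply pair_inj in H. tauto. Qed.

Lemma code_at_fun x i v w : code_at A x i v -> code_at A x i w -> v = w.
Proof.
  intros [n [c [d [-> H1]]]] [n' [c' [d' [H H2]]]].
  apply pair_inj in H. destruct H as [_ H]. apply pair_inj in H. destruct H; subst.
  eapply is_rem_fun; eauto.
Qed.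

Lemma code_at_ex x n i : code_len A x n -> exists v, code_at A x i v.
Proof.
  intros [c [d ->]]. destruct (is_rem_ex c (beta_mod A d i) (beta_mod_pos d i)) as [v Hv].
  exists v, n, c, d. auto.
Qed.

Lemma beta_mod_unit d i δ : zA ≺ δ -> divides A δ d -> zA ≺ d ->
  unit_mod A (beta_mod A d i) (beta_mod A d (i ⊕ δ)).
Proof.
  intros Hδ [f Hd] Hdpos.
  set (j := i ⊕ δ).
  set (W := (j ⊕ oA) ⊗ (j ⊕ oA) ⊗ f).
  set (k0 := (i ⊕ oA) ⊗ (j ⊕ oA) ⊗ f).
  assert (HMp : zA ≺ (j ⊕ oA) ⊗ d) by (rewrite mulC; apply pos_mul; auto; apply lt_0S).
  destruct (zero_or_S ((j ⊕ oA) ⊗ d)) as [H0|[Mpp HMpp]].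
  { exfalso. rewrite H0 in HMp. eapply lt_irr; eauto. }
  (* the identity behind the coprimality of the moduli, using [d = (j - i) f] *)
  assert (Hinv : beta_mod A d i ⊗ W ⊕ oA = (k0 ⊕ oA) ⊗ beta_mod A d j).
  { unfold beta_mod, W, k0, j. rewrite Hd. ring. }
  assert (Hj : beta_mod A d j = Mpp ⊕ oA ⊕ oA) by (unfold beta_mod; rewrite HMpp; ring).
  exists (W ⊗ (Mpp ⊕ oA)), ((k0 ⊕ oA) ⊗ Mpp ⊕ k0).
  apply (add_cancel _ _ (Mpp ⊕ oA)).
  transitivity ((beta_mod A d i ⊗ W ⊕ oA) ⊗ (Mpp ⊕ oA)); [ring|].
  rewrite Hinv, Hj. ring.
Qed.

Section BetaCode.
Variables (G : Sc A) (N : M).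
Hypothesis G_total : forall i, i ≺ N -> exists v, mem A (pair A i v) G.
Hypothesis G_fun : forall i v w, i ≺ N -> mem A (pair A i v) G -> mem A (pair A i w) G -> v = w.

Lemma beta_base_exists : exists d, zA ≺ d /\ (forall j, zA ≺ j -> j ≼ N -> divides A j d) /\
  (forall i v, i ≺ N -> mem A (pair A i v) G -> v ≺ d).
Proof.
  cut (forall n, n ≼ N -> exists d, zA ≺ d /\ (forall j, zA ≺ j -> j ≼ n -> divides A j d) /\
    (forall i v, i ≺ n -> mem A (pair A i v) G -> v ≺ d)).
  { intro H. apply H, le_refl. }
  induct (fun A n (e : nat -> Mc A) (s : nat -> Sc A) => le A n (e 0) -> exists d,
    lt A (zero A) d /\ (forall j, lt A (zero A) j -> le A j n -> divides A j d) /\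
    (forall i v, lt A i n -> mem A (pair A i v) (s 0) -> lt A v d)) (env [N]) (senv [G]).
  - intros _. exists oA. split; [|split].
    + rewrite <- (add0l oA). apply lt_0S.
    + intros j Hj Hj'. exfalso. eapply le_not_lt; eauto.
    + intros i v Hi. exfalso; eapply not_lt0; eauto.
  - intros n IH HnN. apply lt_le_S in HnN.
    destruct IH as [d [Hd0 [Hd1 Hd2]]]; [apply lt_le; auto|].
    destruct (G_total n HnN) as [vn Hvn].
    exists (d ⊗ (n ⊕ oA) ⊗ (vn ⊕ oA)). split; [|split].
    + apply pos_mul; [apply pos_mul; auto|]; apply lt_0S.
    + intros j Hj Hjn. destruct Hjn as [Hjn| ->].
      * apply lt_succ_le in Hjn. destruct (Hd1 j Hj Hjn) as [k ->].
        exists (k ⊗ (n ⊕ oA) ⊗ (vn ⊕ oA)). ring.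
      * exists (d ⊗ (vn ⊕ oA)). ring.
    + intros i v Hi Hv. apply lt_succ_le in Hi. destruct Hi as [Hi| ->].
      * eapply lt_le_trans; [apply (Hd2 i v Hi Hv)|].
        rewrite mulA. apply le_mul_pos, pos_mul; apply lt_0S.
      * rewrite (G_fun n v vn HnN Hv Hvn).
        eapply lt_le_trans; [apply lt_S|]. rewrite mulC. apply le_mul_pos.
        apply pos_mul; auto. apply lt_0S.
Qed.

Lemma crt_step d n c Q : zA ≺ d -> (forall j, zA ≺ j -> j ≼ N -> divides A j d) ->
  (forall i v, i ≺ N -> mem A (pair A i v) G -> v ≺ d) ->
  n ≺ N -> crt_invariant A N d G n c Q -> exists c' Q', crt_invariant A N d G (n ⊕ oA) c' Q'.
Proof.
  intros Hd0 Hd1 Hd2 HnN [Hc [HQ Hinv]].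
  destruct (G_total n HnN) as [vn Hvn].
  assert (Hvm : vn ≺ beta_mod A d n).
  { eapply lt_le_trans; [apply (Hd2 n vn HnN Hvn)|].
    unfold beta_mod. apply le_ex. exists (oA ⊕ n ⊗ d). ring. }
  destruct (is_rem_adjust c Q _ vn Hvm (Hinv n (le_refl n) HnN)) as [t Ht].
  exists (c ⊕ Q ⊗ t), (Q ⊗ beta_mod A d n). split; [|split].
  - intros i v Hi Hv. apply lt_succ_le in Hi. destruct Hi as [Hi| ->].
    + destruct (HQ i Hi) as [k ->].
      replace (c ⊕ k ⊗ beta_mod A d i ⊗ t) with (c ⊕ (k ⊗ t) ⊗ beta_mod A d i) by ring.
      apply is_rem_add, Hc; auto.
    + rewrite (G_fun n v vn HnN Hv Hvn). exact Ht.
  - intros i Hi. apply lt_succ_le in Hi. destruct Hi as [Hi| ->].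
    + destruct (HQ i Hi) as [k ->]. exists (k ⊗ beta_mod A d n). ring.
    + exists Q. ring.
  - intros j Hj HjN. apply lt_le_S in Hj.
    apply unit_mod_mul; [apply Hinv; [apply lt_le|]; auto|].
    apply lt_ex in Hj. destruct Hj as [δ ->]. rewrite addA.
    apply beta_mod_unit; auto; [apply lt_0S|].
    apply Hd1; [apply lt_0S|]. apply lt_le. eapply le_lt_trans; [|apply HjN]. apply le_ex. exists n. ring.
Qed.

Lemma code_exists : exists x, code_len A x N /\
  forall i v, i ≺ N -> mem A (pair A i v) G -> code_at A x i v.
Proof.
  destruct beta_base_exists as [d [Hd0 [Hd1 Hd2]]].
  assert (Hinv : forall n, n ≼ N -> exists c Q, crt_invariant A N d G n c Q).
  { induct (fun A n (e : nat -> Mc A) (s : nat -> Sc A) =>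
      le A n (e 0) -> exists c Q, crt_invariant A (e 0) (e 1) (s 0) n c Q)
      (env [N; d]) (senv [G]).
    - intros _. exists zA, oA. split; [|split].
      + intros i v Hi. exfalso; eapply not_lt0; eauto.
      + intros i Hi. exfalso; eapply not_lt0; eauto.
      + intros j _ _. exists oA, zA. ring.
    - intros n IH HnN. apply lt_le_S in HnN.
      destruct (IH (lt_le _ _ HnN)) as [c [Q HcQ]]. exact (crt_step d n c Q Hd0 Hd1 Hd2 HnN HcQ). }
  destruct (Hinv N (le_refl N)) as [c [Q [Hc _]]].
  exists (pair A N (pair A c d)). split; [exists c, d; auto|].
  intros i v Hi Hv. exists N, c, d. auto.
Qed.

End BetaCode.

Lemma code_snoc x n v : code_len A x n -> exists x', code_len A x' (n ⊕ oA) /\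
  (forall i w, i ≺ n -> code_at A x i w -> code_at A x' i w) /\ code_at A x' n v.
Proof.
  intro Hx.
  destruct (pair_comprehension (fun A i w (e : nat -> Mc A) (s : nat -> Sc A) =>
     (lt A i (e 1) /\ code_at A (e 0) i w) \/ (i = e 1 /\ w = e 2))
     ltac:(solve_definable) (env [x; n; v]) (senv [])) as [G HG].
  unfold_env.
  destruct (code_exists G (n ⊕ oA)) as [x' [Hl He]].
  - intros i Hi. apply lt_succ_le in Hi. destruct Hi as [Hi| ->].
    + destruct (code_at_ex x n i Hx) as [w Hw]. exists w. apply HG. auto.
    + exists v. apply HG. auto.
  - intros i w w' Hi H1 H2. apply HG in H1. apply HG in H2.
    destruct H1 as [[H1 H1']|[H1 H1']]; destruct H2 as [[H2 H2']|[H2 H2']]; subst.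
    + eapply code_at_fun; eauto.
    + exfalso; eapply lt_irr; eauto.
    + exfalso; eapply lt_irr; eauto.
    + auto.
  - exists x'. split; auto. split.
    + intros i w Hi Hw. apply He; [eapply lt_trans; [apply Hi| apply lt_S]|]. apply HG. auto.
    + apply He; [apply lt_S|]. apply HG. auto.
Qed.

(** * The Kleene-Brouwer order *)

Lemma code_at_sym x y i : (exists n, code_len A y n) ->
  (forall v, code_at A y i v -> code_at A x i v) -> forall v, code_at A x i v -> code_at A y i v.
Proof.
  intros [n Hn] H v Hv. destruct (code_at_ex y n i Hn) as [w Hw].
  rewrite (code_at_fun x i v w Hv (H w Hw)). auto.
Qed.

Lemma code_eqv_sym x y : code_eqv A x y -> code_eqv A y x.
Proof.
  intros [n [Hx [Hy H]]]. exists n. split; auto. split; auto.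
  intros i Hi. apply code_at_sym; eauto.
Qed.

Lemma canonical_uniq x y : canonical A x -> canonical A y -> code_eqv A x y -> x = y.
Proof.
  intros [_ Hx] [_ Hy] H. destruct (lt_tri x y) as [H1|[H1|H1]]; auto; exfalso.
  - exact (Hy x H1 H).
  - exact (Hx y H1 (code_eqv_sym x y H)).
Qed.

Lemma code_first_diff x y n m : code_len A x n -> code_len A y m ->
  (forall j v, j ≺ n -> j ≺ m -> code_at A y j v -> code_at A x j v) \/
  exists i v w, i ≺ n /\ i ≺ m /\ (forall j u, j ≺ i -> code_at A y j u -> code_at A x j u) /\
    code_at A x i v /\ code_at A y i w /\ v <> w.
Proof.
  intros Hn Hm.
  destruct (classic (exists i, i ≺ n /\ i ≺ m /\ ~ forall v, code_at A y i v -> code_at A x i v))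
    as [Hd|Hd].
  - right.
    destruct (least_number (fun A i (e : nat -> Mc A) (s : nat -> Sc A) => lt A i (e 0) /\
         lt A i (e 1) /\ ~ (forall v, code_at A (e 3) i v -> code_at A (e 2) i v))
         ltac:(solve_definable) (env [n; m; x; y]) (senv []) Hd) as [i [[Hi1 [Hi2 Hi3]] Hmin]].
    unfold_env.
    destruct (code_at_ex x n i Hn) as [v Hv]. destruct (code_at_ex y m i Hm) as [w Hw].
    exists i, v, w. repeat split; auto.
    + intros j u Hj Hu. apply NNPP. intro Hc. apply (Hmin j Hj).
      split; [eauto using lt_trans|]. split; [eauto using lt_trans|].
      intro H. apply Hc, H, Hu.
    + intros <-. apply Hi3. intros u Hu. rewrite (code_at_fun y i u v Hu Hw). auto.
  - left. intros j v Hj1 Hj2 Hv. apply NNPP. intro Hc. apply Hd. exists j.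
    refine (conj Hj1 (conj Hj2 _)). intro H. apply Hc, H, Hv.
Qed.

Lemma kb_irr x : ~ kb_lt A x x.
Proof.
  intros [n [m [Hn [Hm [[H _]|[i [_ [_ [_ [v [w [Hv [Hw Hvw]]]]]]]]]]]]].
  - rewrite (code_len_fun x n m Hn Hm) in H. eapply lt_irr; eauto.
  - rewrite (code_at_fun x i v w Hv Hw) in Hvw. eapply lt_irr; eauto.
Qed.

Lemma kb_trans x y z : kb_lt A x y -> kb_lt A y z -> kb_lt A x z.
Proof.
  intros [nx [ny [Hx [Hy Hxy]]]] [ny' [nz [Hy' [Hz Hyz]]]].
  rewrite <- (code_len_fun y ny ny' Hy Hy') in *. clear ny' Hy'.
  assert (Hy_code : exists n, code_len A y n) by eauto.
  exists nx, nz. refine (conj Hx (conj Hz _)).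
  destruct Hxy as [[Hl1 Ha1]|[i [Hi1 [Hi2 [Ha1 [v [w [Hv [Hw Hvw]]]]]]]]];
  destruct Hyz as [[Hl2 Ha2]|[k [Hk1 [Hk2 [Ha2 [v' [w' [Hv' [Hw' Hvw']]]]]]]]].
  - left. split; [eauto using lt_trans|]. intros i v Hi Hv.
    apply Ha1, Ha2; eauto using lt_trans.
  - right. exists k. refine (conj _ (conj Hk2 (conj _ _))); [eauto using lt_trans | |].
    + intros j u Hj Hu. apply Ha1, Ha2; eauto using lt_trans.
    + exists v', w'. auto.
  - destruct (lt_tri i nz) as [Hiz|Hiz].
    + right. exists i. refine (conj Hi1 (conj Hiz (conj _ _))).
      * intros j u Hj Hu. apply Ha1, Ha2; eauto using lt_trans.
      * exists v, w. refine (conj Hv (conj _ Hvw)). apply (code_at_sym y z i); eauto.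
    + left. assert (Hzi : nz ≼ i) by (destruct Hiz as [->|H]; [right | left]; auto).
      split; [eauto using le_lt_trans|].
      intros j u Hj Hu. apply Ha1, Ha2; eauto using lt_le_trans.
  - right. destruct (lt_tri i k) as [Hik|[<-|Hik]].
    + exists i. refine (conj Hi1 (conj (lt_trans _ _ _ Hik Hk2) (conj _ _))).
      * intros j u Hj Hu. apply Ha1, Ha2; eauto using lt_trans.
      * exists v, w. refine (conj Hv (conj _ Hvw)). apply (code_at_sym y z i); eauto.
    + exists i. refine (conj Hi1 (conj Hk2 (conj _ _))).
      * intros j u Hj Hu. apply Ha1, Ha2; auto.
      * exists v, w'. refine (conj Hv (conj Hw' _)).
        rewrite (code_at_fun y i w v' Hw Hv') in Hvw. eapply lt_trans; eauto.
    + exists k. refine (conj (lt_trans _ _ _ Hik Hi1) (conj Hk2 (conj _ _))).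
      * intros j u Hj Hu. apply Ha1, Ha2; eauto using lt_trans.
      * exists v', w'. refine (conj _ (conj Hw' Hvw')). apply Ha1; auto.
Qed.

Lemma kb_total x y : canonical A x -> canonical A y -> kb_lt A x y \/ x = y \/ kb_lt A y x.
Proof.
  intros Cx Cy. pose proof Cx as [[n Hn] _]. pose proof Cy as [[m Hm] _].
  destruct (code_first_diff x y n m Hn Hm)
    as [Hag|[i [v [w [Hi1 [Hi2 [Hag [Hv [Hw Hne]]]]]]]]].
  - assert (Hag' : forall j v, j ≺ n -> j ≺ m -> code_at A x j v -> code_at A y j v).
    { intros j u Hj1 Hj2. apply code_at_sym; eauto. }
    destruct (lt_tri n m) as [Hnm|[<-|Hnm]].
    + right; right. exists m, n. repeat split; auto. left. split; [exact Hnm|].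
      intros j u Hj. apply Hag'; eauto using lt_trans.
    + right; left. apply canonical_uniq; auto. exists n. repeat split; auto.
    + left. exists n, m. repeat split; auto. left. split; [exact Hnm|].
      intros j u Hj. apply Hag; eauto using lt_trans.
  - destruct (lt_tri v w) as [Hvw|[Hvw|Hvw]]; [left| tauto | right; right].
    + exists n, m. repeat split; auto. right. exists i. repeat split; auto. exists v, w. auto.
    + exists m, n. repeat split; auto. right. exists i. repeat split; auto.
      * intros j u Hj. apply code_at_sym; eauto.
      * exists w, v. auto.
Qed.

Lemma kb_lt_beyond x y k l m : kb_lt A x y -> code_len A x l -> code_len A y m ->
  (forall j v, j ≺ k -> code_at A y j v -> code_at A x j v) ->
  (m ≺ l /\ forall i v, i ≺ m -> code_at A y i v -> code_at A x i v) \/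
  (exists i, k ≼ i /\ i ≺ l /\ i ≺ m /\
     (forall j v, j ≺ i -> code_at A y j v -> code_at A x j v) /\
     exists v w, code_at A x i v /\ code_at A y i w /\ v ≺ w).
Proof.
  intros [l' [m' [Hl' [Hm' H]]]] Hl Hm Hag.
  rewrite (code_len_fun x l' l Hl' Hl), (code_len_fun y m' m Hm' Hm) in H.
  destruct H as [H|[i [Hi1 [Hi2 [Hi3 [v [w [Hv [Hw Hvw]]]]]]]]]; [left; auto|right].
  exists i. refine (conj _ (conj Hi1 (conj Hi2 (conj Hi3 _)))); [|exists v, w; auto].
  apply not_lt. intro Hik. apply (lt_irr v).
  rewrite (code_at_fun x i v w Hv (Hag i w Hik Hw)) at 2. exact Hvw.
Qed.


(** * The linear order disj(alpha, beta) *)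

Lemma desc_seq_embedding D1 R1 D2 R2 :
  DescSeq A D1 R1 -> Embedding A D1 R1 D2 R2 -> DescSeq A D2 R2.
Proof.
  intros [Fa [HA1 [HA2 HA3]]] [FE [HE1 [HE2 HE3]]].
  destruct (pair_comprehension (fun A n y (e : nat -> Mc A) (s : nat -> Sc A) =>
     exists a, mem A (pair A n a) (s 0) /\ mem A (pair A a y) (s 1))
     ltac:(solve_definable) (env []) (senv [Fa; FE])) as [F HF].
  unfold_env.
  assert (Hin : forall n a, mem A (pair A n a) Fa -> mem A a D1).
  { intros n a H. destruct (HA1 n) as [m [Hm1 Hm2]]. rewrite (HA2 _ _ _ H Hm1). auto. }
  exists F. split; [|split].
  - intros n. destruct (HA1 n) as [a [Ha1 Ha2]]. destruct (HE1 a Ha2) as [y [Hy1 Hy2]].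
    exists y. split; auto. apply HF. eauto.
  - intros n y y' H1 H2. apply HF in H1. apply HF in H2.
    destruct H1 as [a [Ha Hy]]. destruct H2 as [a' [Ha' Hy']].
    rewrite (HA2 _ _ _ Ha Ha') in Hy. exact (HE2 a' y y' (Hin _ _ Ha') Hy Hy').
  - intros n y y' H1 H2. apply HF in H1. apply HF in H2.
    destruct H1 as [a [Ha Hy]]. destruct H2 as [a' [Ha' Hy']].
    exact (HE3 a' a y' y (Hin _ _ Ha') (Hin _ _ Ha) Hy' Hy (HA3 _ _ _ Ha Ha')).
Qed.

Definition PairDescSeq (P : Sc A) (Da Ra Db Rb : Sc A) :=
  (forall k, exists a b, mem A (pair A k (pair A a b)) P /\ mem A a Da /\ mem A b Db) /\
  (forall k v v', mem A (pair A k v) P -> mem A (pair A k v') P -> v = v') /\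
  (forall k a b a' b', mem A (pair A k (pair A a b)) P ->
     mem A (pair A (k ⊕ oA) (pair A a' b')) P ->
     mem A (pair A a' a) Ra /\ mem A (pair A b' b) Rb).

Lemma pair_desc_seq_fst P Da Ra Db Rb : PairDescSeq P Da Ra Db Rb -> DescSeq A Da Ra.
Proof.
  intros [Htot [Hfun Hdesc]].
  destruct (pair_comprehension (fun A k a (e : nat -> Mc A) (s : nat -> Sc A) =>
     exists b, mem A (pair A k (pair A a b)) (s 0))
     ltac:(solve_definable) (env []) (senv [P])) as [Q HQ].
  unfold_env.
  exists Q. split; [|split].
  - intros k. destruct (Htot k) as [a [b [Hab [Ha _]]]]. exists a. split; auto. apply HQ. eauto.
  - intros k a a' H H'. apply HQ in H. apply HQ in H'. destruct H as [b H]. destruct H' as [b' H'].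
    apply (pair_inj a b a' b'), (Hfun k); auto.
  - intros k a a' H H'. apply HQ in H. apply HQ in H'. destruct H as [b H]. destruct H' as [b' H'].
    exact (proj1 (Hdesc k a b a' b' H H')).
Qed.

Lemma pair_desc_seq_swap P Da Ra Db Rb :
  PairDescSeq P Da Ra Db Rb -> exists P', PairDescSeq P' Db Rb Da Ra.
Proof.
  intros [Htot [Hfun Hdesc]].
  destruct (pair_comprehension (fun A k v (e : nat -> Mc A) (s : nat -> Sc A) =>
     exists a b, v = pair A b a /\ mem A (pair A k (pair A a b)) (s 0))
     ltac:(solve_definable) (env []) (senv [P])) as [P' HP'].
  unfold_env.
  assert (HP : forall k a b, mem A (pair A k (pair A b a)) P' <-> mem A (pair A k (pair A a b)) P).
  { intros k a b. rewrite HP'. split; [|eauto].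
    intros [a' [b' [E H]]]. apply pair_inj in E. destruct E; subst. exact H. }
  exists P'. split; [|split].
  - intros k. destruct (Htot k) as [a [b [Hab [Ha Hb]]]]. exists b, a. rewrite HP. auto.
  - intros k v v' H H'. apply HP' in H. apply HP' in H'.
    destruct H as [a [b [-> H]]]. destruct H' as [a' [b' [-> H']]].
    destruct (pair_inj a b a' b' (Hfun k _ _ H H')). subst. reflexivity.
  - intros k b a b' a' H H'. rewrite HP in H, H'.
    destruct (Hdesc k a b a' b' H H'). auto.
Qed.

Section Disj.
Variables Da Ra Db Rb Dd Rd : Sc A.
Hypothesis Dd_def : forall x, mem A x Dd <-> disj_node A Da Ra Db Rb x.
Hypothesis Rd_def : forall z, mem A z Rd <-> disj_rel A Da Ra Db Rb z.
Local Notation node := (disj_node A Da Ra Db Rb).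

Lemma Rd_pair x y : mem A (pair A x y) Rd <-> node x /\ node y /\ kb_lt A x y.
Proof.
  rewrite Rd_def. split.
  - intros [x' [y' [E H]]]. apply pair_inj in E. destruct E; subst. auto.
  - intros H. exists x, y. auto.
Qed.

Lemma disj_LO : IsLO A Dd Rd.
Proof.
  split; [|split; [|split]].
  - intros x y H. apply Rd_pair in H. rewrite !Dd_def. tauto.
  - intros x H. apply Rd_pair in H. eapply kb_irr, H.
  - intros x y z H1 H2. apply Rd_pair in H1. apply Rd_pair in H2. apply Rd_pair.
    split; [tauto|]. split; [tauto|]. eapply kb_trans; [apply H1 | apply H2].
  - intros x y Hx Hy. apply Dd_def in Hx. apply Dd_def in Hy.
    destruct (kb_total x y (proj1 Hx) (proj1 Hy)) as [H|[H|H]]; [left | right; left | right; right];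
      rewrite ?Rd_pair; auto.
Qed.

Section Path.
Variable F : Sc A.
Hypothesis F_total : forall n, exists m, mem A (pair A n m) F /\ mem A m Dd.
Hypothesis F_fun : forall n m m', mem A (pair A n m) F -> mem A (pair A n m') F -> m = m'.
Hypothesis F_desc : forall n m m', mem A (pair A n m) F -> mem A (pair A (n ⊕ oA) m') F ->
  mem A (pair A m' m) Rd.

Lemma path_node n x : mem A (pair A n x) F -> node x.
Proof.
  intro H. destruct (F_total n) as [m [Hm1 Hm2]]. rewrite (F_fun n x m H Hm1). apply Dd_def, Hm2.
Qed.

Lemma path_kb n n' x y : n ≺ n' -> mem A (pair A n x) F -> mem A (pair A n' y) F -> kb_lt A y x.
Proof.
  intro H. apply lt_ex in H. destruct H as [k ->]. revert k x y.
  induct (fun A k (e : nat -> Mc A) (s : nat -> Sc A) => forall x y,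
    mem A (pair A (e 0) x) (s 0) -> mem A (pair A (add A (add A (e 0) k) (one A)) y) (s 0) ->
    kb_lt A y x) (env [n]) (senv [F]).
  - intros x y H1 H2. rewrite ax_add0 in H2. apply (Rd_pair y x), (F_desc n); auto.
  - intros k IH x y H1 H2. destruct (F_total (n ⊕ k ⊕ oA)) as [z [Hz _]].
    apply (kb_trans y z x); [|exact (IH x z H1 Hz)].
    apply (Rd_pair y z), (F_desc (n ⊕ k ⊕ oA)); auto.
    replace (n ⊕ k ⊕ oA ⊕ oA) with (n ⊕ (k ⊕ oA) ⊕ oA) by ring. exact H2.
Qed.

Lemma settled_mono k N N' : settled A F k N -> N ≼ N' -> settled A F k N'.
Proof. intros H HN n x n' x' Hn Hn'. apply H; eapply le_trans; eauto. Qed.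

(* Once the nodes agree below [k], a node of length exactly [k] would be a
   proper initial segment of all later ones, so it can occur only once. *)
Lemma settled_len_gt k N : settled A F k N ->
  exists N1, N ≼ N1 /\ forall n x l, N1 ≼ n -> mem A (pair A n x) F -> code_len A x l -> k ≺ l.
Proof.
  intro HN.
  destruct (classic (exists n0 x0, N ≼ n0 /\ mem A (pair A n0 x0) F /\ code_len A x0 k))
    as [[n0 [x0 [Hn0 [Hx0 Hl0]]]]|Hno].
  - exists (n0 ⊕ oA). split; [eapply le_trans; [apply Hn0 | apply lt_le, lt_S]|].
    intros n x l Hn Hx Hl. apply lt_le_S in Hn.
    assert (HNn : N ≼ n) by (eapply le_trans; [apply Hn0 | apply lt_le, Hn]).
    destruct (HN n x n0 x0 HNn Hn0 Hx Hx0) as [_ Hag].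
    destruct (kb_lt_beyond x x0 k l k (path_kb n0 n x0 x Hn Hx0 Hx) Hl Hl0 Hag)
      as [[H _]|[i [Hi1 [_ [Hi2 _]]]]]; auto.
    exfalso. eapply le_not_lt; eauto.
  - exists N. split; [apply le_refl|]. intros n x l Hn Hx Hl.
    destruct (HN n x n x Hn Hn Hx Hx) as [Hk _]. destruct (Hk l Hl) as [H| <-]; auto.
    exfalso. apply Hno. eauto.
Qed.

(* Past [N1] the [k]-th entries can only decrease, so the least value they
   take is eventually constant. *)
Lemma settled_entry k N1 : settled A F k N1 ->
  (forall n x l, N1 ≼ n -> mem A (pair A n x) F -> code_len A x l -> k ≺ l) ->
  exists n0 w0, N1 ≼ n0 /\ forall n x, n0 ≼ n -> mem A (pair A n x) F -> code_at A x k w0.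
Proof.
  intros HN Hlen.
  destruct (F_total N1) as [x1 [Hx1 _]].
  destruct (path_node N1 x1 Hx1) as [[[l1 Hl1] _] _].
  destruct (code_at_ex x1 l1 k Hl1) as [w1 Hw1].
  destruct (least_number (fun A w (e : nat -> Mc A) (s : nat -> Sc A) => exists n x,
      le A (e 0) n /\ mem A (pair A n x) (s 0) /\ code_at A x (e 1) w)
      ltac:(solve_definable) (env [N1; k]) (senv [F])) as [w0 [[n0 [x0 [Hn0 [Hx0 Hw0]]]] Hmin]].
  { exists w1, N1, x1. unfold_env. auto using le_refl. }
  unfold_env. exists n0, w0. split; auto.
  intros n x [Hn| <-] Hx; [|rewrite (F_fun n0 x x0 Hx Hx0); auto].
  assert (HNn : N1 ≼ n) by (eapply le_trans; [apply Hn0 | apply lt_le, Hn]).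
  destruct (HN n x n0 x0 HNn Hn0 Hx Hx0) as [_ Hag].
  destruct (path_node n x Hx) as [[[l Hl] _] _].
  destruct (path_node n0 x0 Hx0) as [[[l0 Hl0] _] _].
  assert (Hkl0 : k ≺ l0) by exact (Hlen n0 x0 l0 Hn0 Hx0 Hl0).
  destruct (kb_lt_beyond x x0 k l l0 (path_kb n0 n x0 x Hn Hx0 Hx) Hl Hl0 Hag)
    as [[_ H]|[i [[Hki| <-] [_ [_ [Hi [v [w [Hv [Hw Hvw]]]]]]]]]].
  - exact (H k w0 Hkl0 Hw0).
  - exact (Hi k w0 Hki Hw0).
  - rewrite (code_at_fun x0 k w w0 Hw Hw0) in Hvw. exfalso. apply (Hmin v Hvw).
    exists n, x. auto.
Qed.

Lemma settled_ex k : exists N, settled A F k N.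
Proof.
  revert k. induct (fun A k (e : nat -> Mc A) (s : nat -> Sc A) => exists N, settled A (s 0) k N)
    (env []) (senv [F]).
  - exists zA. intros n x n' x' _ _ _ _. split.
    + intros l _. apply le_0.
    + intros j v Hj. exfalso. eapply not_lt0; eauto.
  - intros k [N HN].
    destruct (settled_len_gt k N HN) as [N1 [HN1 Hlen]].
    destruct (settled_entry k N1 (settled_mono k N N1 HN HN1) Hlen) as [n0 [w0 [Hn0 Hw0]]].
    exists n0. intros n x n' x' Hn Hn' Hx Hx'. split.
    + intros l Hl. apply lt_le_S. exact (Hlen n x l (le_trans _ _ _ Hn0 Hn) Hx Hl).
    + intros j v Hj Hv. apply lt_succ_le in Hj. destruct Hj as [Hj| ->].
      * apply (settled_mono k N n0 HN (le_trans _ _ _ HN1 Hn0) n x n' x'); auto.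
      * rewrite (code_at_fun x' k v w0 Hv (Hw0 n' x' Hn' Hx')). apply (Hw0 n x Hn Hx).
Qed.

Lemma path_eventual_entry k : exists N a b, mem A a Da /\ mem A b Db /\
  forall n x, N ≼ n -> mem A (pair A n x) F -> code_at A x k (pair A a b).
Proof.
  destruct (settled_ex (k ⊕ oA)) as [N HN]. destruct (F_total N) as [xN [HxN _]].
  destruct (path_node N xN HxN) as [_ [l [Hl [_ [Hent _]]]]].
  destruct (HN N xN N xN (le_refl N) (le_refl N) HxN HxN) as [Hlen _].
  assert (Hkl : k ≺ l) by (apply lt_le_S, Hlen, Hl).
  destruct (code_at_ex xN l k Hl) as [v Hv].
  destruct (Hent k v Hkl Hv) as [a [b [-> [Ha Hb]]]].
  exists N, a, b. split; auto. split; auto. intros n x Hn Hx.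
  destruct (HN n x N xN Hn (le_refl N) Hx HxN) as [_ Hag]. apply Hag; auto. apply lt_S.
Qed.

(* The limit of the path: its [k]-th term is the eventual [k]-th entry. *)
Lemma path_limit : exists P, PairDescSeq P Da Ra Db Rb.
Proof.
  destruct (pair_comprehension (fun A k v (e : nat -> Mc A) (s : nat -> Sc A) =>
     exists N, forall n x, le A N n -> mem A (pair A n x) (s 0) -> code_at A x k v)
     ltac:(solve_definable) (env []) (senv [F])) as [P HP].
  unfold_env.
  exists P. split; [|split].
  - intro k. destruct (path_eventual_entry k) as [N [a [b [Ha [Hb H]]]]].
    exists a, b. split; auto. apply HP. eauto.
  - intros k v v' H1 H2. apply HP in H1. apply HP in H2.
    destruct H1 as [N1 H1]. destruct H2 as [N2 H2].
    destruct (F_total (N1 ⊕ N2)) as [x [Hx _]].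
    apply (code_at_fun x k); [apply (H1 _ x (le_add_r N1 N2) Hx) | apply (H2 _ x (le_add_l N2 N1) Hx)].
  - intros k a b a' b' H1 H2. apply HP in H1. apply HP in H2.
    destruct H1 as [N1 H1]. destruct H2 as [N2 H2].
    destruct (settled_ex (k ⊕ oA ⊕ oA)) as [N3 HN3].
    set (n := N1 ⊕ N2 ⊕ N3).
    assert (Hn1 : N1 ≼ n) by (apply le_ex; exists (N2 ⊕ N3); unfold n; ring).
    assert (Hn2 : N2 ≼ n) by (apply le_ex; exists (N1 ⊕ N3); unfold n; ring).
    assert (Hn3 : N3 ≼ n) by (apply le_ex; exists (N1 ⊕ N2); unfold n; ring).
    destruct (F_total n) as [x [Hx _]].
    destruct (path_node n x Hx) as [_ [l [Hl [_ [_ Hdesc]]]]].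
    destruct (HN3 n x n x Hn3 Hn3 Hx Hx) as [Hlen _].
    destruct (Hdesc k _ _ (proj2 (lt_le_S _ _) (Hlen l Hl)) (H1 n x Hn1 Hx) (H2 n x Hn2 Hx))
      as [a0 [b0 [a0' [b0' [E1 [E2 [Ha Hb]]]]]]].
    apply pair_inj in E1. apply pair_inj in E2. destruct E1, E2; subst. auto.
Qed.

Lemma path_desc_seqs : DescSeq A Da Ra /\ DescSeq A Db Rb.
Proof.
  destruct path_limit as [P HP]. split.
  - exact (pair_desc_seq_fst P Da Ra Db Rb HP).
  - destruct (pair_desc_seq_swap P Da Ra Db Rb HP) as [P' HP'].
    exact (pair_desc_seq_fst P' Db Rb Da Ra HP').
Qed.

End Path.

(** * Embedding alpha into disj(alpha, beta) *)

Section Embed.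
Hypothesis Da_LO : IsLO A Da Ra.
Variable Fb : Sc A.
Hypothesis Fb_total : forall n, exists m, mem A (pair A n m) Fb /\ mem A m Db.
Hypothesis Fb_fun : forall n m m', mem A (pair A n m) Fb -> mem A (pair A n m') Fb -> m = m'.
Hypothesis Fb_desc : forall n m m', mem A (pair A n m) Fb -> mem A (pair A (n ⊕ oA) m') Fb ->
  mem A (pair A m' m) Rb.
Local Notation rec := (record A Da Ra).
Local Notation rcode := (record_code A Da Ra Fb).

Lemma Ra_irrefl x : ~ mem A (pair A x x) Ra.
Proof. apply Da_LO. Qed.

Lemma Ra_trans x y z : mem A (pair A x y) Ra -> mem A (pair A y z) Ra -> mem A (pair A x z) Ra.
Proof. apply Da_LO. Qed.

Lemma Ra_total x y : mem A x Da -> mem A y Da ->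
  mem A (pair A x y) Ra \/ x = y \/ mem A (pair A y x) Ra.
Proof. apply Da_LO. Qed.

Lemma Ra_asym x y : mem A (pair A x y) Ra -> ~ mem A (pair A y x) Ra.
Proof. intros H1 H2. apply (Ra_irrefl x). eapply Ra_trans; eauto. Qed.

Lemma record_le a y : mem A a Da -> rec a y -> y ≼ a.
Proof.
  intros Ha [Hy [Hay Hmin]]. apply not_lt. intro H.
  pose proof (Hmin a H Ha (or_introl eq_refl)) as H1.
  destruct Hay as [->|H2]; [eapply Ra_irrefl | eapply Ra_asym]; eauto.
Qed.

Lemma record_self a : mem A a Da -> rec a a.
Proof.
  intros Ha. split; auto. split; [left; auto|]. intros z Hz _ [->|H]; auto.
  exfalso; eapply lt_irr; eauto.
Qed.

Lemma Fb_in n b : mem A (pair A n b) Fb -> mem A b Db.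
Proof. intros H. destruct (Fb_total n) as [m [Hm1 Hm2]]. rewrite (Fb_fun _ _ _ H Hm1). auto. Qed.

Lemma record_prefix_snoc a N x n : rec a N -> record_prefix A Da Ra Fb a N x n ->
  exists x' n', record_prefix A Da Ra Fb a (N ⊕ oA) x' n'.
Proof.
  intros HN [Hl [Hent [Hinc Hcov]]].
  destruct (Fb_total n) as [bn [Hbn _]].
  destruct (code_snoc x n (pair A N bn) Hl) as [x' [Hl' [Hold Hnew]]].
  assert (Hold' : forall i v, i ≺ n -> code_at A x' i v -> code_at A x i v).
  { intros i v Hi. revert v. apply code_at_sym; eauto. }
  exists x', (n ⊕ oA). split; auto. split; [|split].
  - intros i v Hi Hv. apply lt_succ_le in Hi. destruct Hi as [Hi| ->].
    + destruct (Hent i v Hi (Hold' i v Hi Hv)) as [r [b [-> [Hb [Hr HrN]]]]].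
      exists r, b. refine (conj eq_refl (conj Hb (conj Hr _))). eapply lt_trans; [apply HrN | apply lt_S].
    + rewrite (code_at_fun x' n v _ Hv Hnew). exists N, bn.
      exact (conj eq_refl (conj Hbn (conj HN (lt_S N)))).
  - intros i v w Hi Hv Hw. apply lt_succ_le in Hi. destruct Hi as [Hi| Hi].
    + assert (Hi' : i ≺ n) by (eapply lt_trans; [apply lt_S | apply Hi]).
      exact (Hinc i v w Hi (Hold' i v Hi' Hv) (Hold' _ w Hi Hw)).
    + rewrite Hi in Hw. rewrite (code_at_fun x' n w _ Hw Hnew).
      assert (Hin : i ≺ n) by (rewrite <- Hi; apply lt_S).
      destruct (Hent i v Hin (Hold' i v Hin Hv)) as [r [b [-> [_ [_ HrN]]]]].
      exists r, b, N, bn. auto.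
  - intros y Hy Hry. apply lt_succ_le in Hy. destruct Hy as [Hy| ->].
    + destruct (Hcov y Hy Hry) as [i [b [Hi Hib]]]. exists i, b.
      split; [eapply lt_trans; [apply Hi | apply lt_S] | apply Hold; auto].
    + exists n, bn. split; auto. apply lt_S.
Qed.

Lemma record_prefix_ex a N : exists x n, record_prefix A Da Ra Fb a N x n.
Proof.
  revert N. induct (fun A N (e : nat -> Mc A) (s : nat -> Sc A) =>
    exists x n, record_prefix A (s 0) (s 1) (s 2) (e 0) N x n) (env [a]) (senv [Da; Ra; Fb]).
  - exists (pair A zA (pair A zA zA)), zA. split; [exists zA, zA; auto|].
    split; [|split]; intros; exfalso; eapply not_lt0; eauto.
  - intros N [x [n Hx]]. destruct (classic (rec a N)) as [HN|HN].
    + exact (record_prefix_snoc a N x n HN Hx).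
    + destruct Hx as [Hl [Hent [Hinc Hcov]]]. exists x, n. split; auto. split; [|split]; auto.
      * intros i v Hi Hv. destruct (Hent i v Hi Hv) as [r [b [-> [Hb [Hr HrN]]]]].
        exists r, b. refine (conj eq_refl (conj Hb (conj Hr _))). eapply lt_trans; [apply HrN | apply lt_S].
      * intros y Hy Hry. apply lt_succ_le in Hy. destruct Hy as [Hy| ->]; [auto | tauto].
Qed.

Lemma record_code_ex a : mem A a Da -> exists x, rcode a x.
Proof.
  intros Ha. destruct (record_prefix_ex a (a ⊕ oA)) as [x [n [Hl [Hent [Hinc Hcov]]]]].
  exists x, n. split; auto. split; [|split]; auto.
  - intros i v Hi Hv. destruct (Hent i v Hi Hv) as [r [b [? [? [? _]]]]]. exists r, b. auto.
  - intros y Hy. apply Hcov; auto. apply lt_succ_le, record_le; auto.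
Qed.

Lemma record_code_eqv a x y : code_eqv A y x -> rcode a x -> rcode a y.
Proof.
  intros [n' [Hy [Hx Hyx]]] [n [Hl [Hent [Hinc Hcov]]]].
  rewrite (code_len_fun x n' n Hx Hl) in *.
  assert (Hxy : forall i v, i ≺ n -> code_at A x i v -> code_at A y i v).
  { intros i v Hi. revert v. apply code_at_sym; eauto. }
  exists n. split; auto. split; [|split].
  - intros i v Hi Hv. apply Hent; auto.
  - intros i v w Hi Hv Hw.
    assert (Hi' : i ≺ n) by (eapply lt_trans; [apply lt_S | apply Hi]).
    exact (Hinc i v w Hi (Hyx i Hi' v Hv) (Hyx _ Hi w Hw)).
  - intros z Hz. destruct (Hcov z Hz) as [i [b [Hi Hib]]]. exists i, b. auto.
Qed.

Lemma record_code_at a x n i : rcode a x -> code_len A x n -> i ≺ n ->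
  exists r b, code_at A x i (pair A r b) /\ mem A (pair A i b) Fb /\ rec a r.
Proof.
  intros [n' [Hl' [Hent _]]] Hl Hi. rewrite (code_len_fun x n' n Hl' Hl) in Hent.
  destruct (code_at_ex x n i Hl) as [v Hv]. destruct (Hent i v Hi Hv) as [r [b [-> [Hb Hr]]]].
  exists r, b. auto.
Qed.

Lemma record_code_mono a x n i j r r' b b' : rcode a x -> code_len A x n -> i ≺ j -> j ≺ n ->
  code_at A x i (pair A r b) -> code_at A x j (pair A r' b') -> r ≺ r'.
Proof.
  intros Hx Hl Hij. pose proof Hx as [n' [Hl' [_ [Hinc _]]]].
  rewrite (code_len_fun x n' n Hl' Hl) in Hinc.
  apply lt_ex in Hij. destruct Hij as [k ->]. revert k r' b'.
  induct (fun A k (e : nat -> Mc A) (s : nat -> Sc A) => forall r' b',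
    lt A (add A (add A (e 2) k) (one A)) (e 1) -> code_at A (e 0) (e 2) (pair A (e 3) (e 4)) ->
    code_at A (e 0) (add A (add A (e 2) k) (one A)) (pair A r' b') -> lt A (e 3) r')
    (env [x; n; i; r; b]) (senv []).
  - intros r' b' Hi Hv Hw. rewrite ax_add0 in *.
    destruct (Hinc i _ _ Hi Hv Hw) as [r1 [b1 [r2 [b2 [E1 [E2 Hr]]]]]].
    apply pair_inj in E1. apply pair_inj in E2. destruct E1, E2; subst. auto.
  - intros k IH r' b' Hi Hv Hw.
    replace (i ⊕ (k ⊕ oA) ⊕ oA) with (i ⊕ k ⊕ oA ⊕ oA) in * by ring.
    assert (Hj : i ⊕ k ⊕ oA ≺ n) by (eapply lt_trans; [apply lt_S | exact Hi]).
    destruct (record_code_at a x n _ Hx Hl Hj) as [r'' [b'' [Hv'' _]]].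
    destruct (Hinc _ _ _ Hi Hv'' Hw) as [r1 [b1 [r2 [b2 [E1 [E2 Hr]]]]]].
    apply pair_inj in E1. apply pair_inj in E2. destruct E1, E2; subst.
    eapply lt_trans; [exact (IH r1 b1 Hj Hv Hv'') | exact Hr].
Qed.

(* [t] is the numerically least element above [a] but below [a']. *)
Lemma records_split a a' : mem A a Da -> mem A a' Da -> mem A (pair A a a') Ra ->
  exists t, rec a t /\ ~ rec a' t /\ forall y, y ≺ t -> (rec a y <-> rec a' y).
Proof.
  intros Ha Ha' Haa'.
  destruct (least_number (fun A y (e : nat -> Mc A) (s : nat -> Sc A) =>
     mem A y (s 0) /\ ord_le A (s 1) (e 0) y /\ mem A (pair A y (e 1)) (s 1))
     ltac:(solve_definable) (env [a; a']) (senv [Da; Ra])) as [t [[Ht1 [Ht2 Ht3]] Hmin]].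
  { exists a. unfold_env. split; auto. split; auto. left; auto. }
  unfold_env.
  assert (Habove : forall z, z ≺ t -> mem A z Da -> (ord_le A Ra a z <-> ord_le A Ra a' z)).
  { intros z Hz HzD. split.
    - intros Haz. destruct (Ra_total z a' HzD Ha') as [H|[H|H]].
      + exfalso. apply (Hmin z Hz). auto.
      + left; auto.
      + right; auto.
    - intros [<-|H]; right; auto. eapply Ra_trans; eauto. }
  exists t. split; [|split].
  - split; auto. split; auto. intros z Hz HzD Haz. apply Habove in Haz; auto.
    destruct Haz as [<-|H]; auto. eapply Ra_trans; eauto.
  - intros [_ [[<-|H] _]]; [eapply Ra_irrefl | eapply Ra_asym]; eauto.
  - intros y Hy. split; intros [H1 [H2 H3]]; (split; [auto|]);
      (split; [apply Habove; auto|]);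
      intros z Hz HzD Hz'; apply H3; auto; apply Habove; eauto using lt_trans.
Qed.

(* Both codes list the same records below [t] in increasing order. *)
Lemma record_codes_agree a a' x n x' n' t it bt :
  rcode a x -> code_len A x n -> rcode a' x' -> code_len A x' n' ->
  (forall y, y ≺ t -> (rec a y <-> rec a' y)) -> it ≺ n -> code_at A x it (pair A t bt) ->
  forall j, j ≺ it -> j ≺ n' /\ forall v, code_at A x j v -> code_at A x' j v.
Proof.
  intros Hx Hl Hx' Hl' Hsplit Hit Hbt.
  pose proof Hx as [n0 [Hl0 [_ [_ Hcov]]]]. rewrite (code_len_fun _ _ _ Hl0 Hl) in Hcov.
  pose proof Hx' as [n1 [Hl1 [Hent' [_ Hcov']]]].
  rewrite (code_len_fun _ _ _ Hl1 Hl') in Hent', Hcov'.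
  cut (forall m j, j ≺ m -> j ≺ it -> j ≺ n' /\ forall v, code_at A x j v -> code_at A x' j v).
  { intros H j Hj. apply (H (j ⊕ oA)); auto. apply lt_S. }
  induct (fun A m (e : nat -> Mc A) (s : nat -> Sc A) => forall j, lt A j m -> lt A j (e 2) ->
    lt A j (e 3) /\ forall v, code_at A (e 0) j v -> code_at A (e 1) j v)
    (env [x; x'; it; n']) (senv []).
  - intros j Hj. exfalso; eapply not_lt0; eauto.
  - intros m IH j Hj Hjit. apply lt_succ_le in Hj. destruct Hj as [Hj| ->]; [apply IH; auto|].
    assert (Hmn : m ≺ n) by (eapply lt_trans; eauto).
    destruct (record_code_at a x n m Hx Hl Hmn) as [r [b [Hr [Hb Hrr]]]].
    assert (Hrt : r ≺ t) by exact (record_code_mono a x n m it r t b bt Hx Hl Hjit Hit Hr Hbt).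
    destruct (Hcov' r (proj1 (Hsplit r Hrt) Hrr)) as [p [bp [Hp Hrp]]].
    destruct (lt_tri p m) as [Hpm|[->|Hpm]].
    + exfalso. destruct (IH p Hpm (lt_trans _ _ _ Hpm Hjit)) as [_ Hag].
      destruct (record_code_at a x n p Hx Hl (lt_trans _ _ _ Hpm Hmn)) as [rp [bp' [Hrp' _]]].
      pose proof (code_at_fun _ _ _ _ Hrp (Hag _ Hrp')) as E.
      apply pair_inj in E. destruct E; subst rp.
      apply (lt_irr r). exact (record_code_mono a x n p m r r bp' b Hx Hl Hpm Hmn Hrp' Hr).
    + split; auto. intros v Hv. rewrite (code_at_fun _ _ _ _ Hv Hr).
      destruct (Hent' m _ Hp Hrp) as [r0 [b0 [E [Hb0 _]]]].
      apply pair_inj in E. destruct E; subst r0 b0. rewrite (Fb_fun _ _ _ Hb Hb0). exact Hrp.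
    + exfalso. assert (Hmn' : m ≺ n') by exact (lt_trans _ _ _ Hpm Hp).
      destruct (record_code_at a' x' n' m Hx' Hl' Hmn') as [r2 [b2 [Hr2 [_ Hrr2]]]].
      assert (Hr2r : r2 ≺ r) by exact (record_code_mono a' x' n' m p r2 r b2 bp Hx' Hl' Hpm Hp Hr2 Hrp).
      assert (Hr2a : rec a r2) by (apply Hsplit; eauto using lt_trans).
      destruct (Hcov r2 Hr2a) as [q [bq [Hq Hrq]]].
      destruct (lt_tri q m) as [Hqm|[->|Hqm]].
      * destruct (IH q Hqm (lt_trans _ _ _ Hqm Hjit)) as [_ Hag].
        apply (lt_irr r2).
        exact (record_code_mono a' x' n' q m r2 r2 bq b2 Hx' Hl' Hqm Hmn' (Hag _ Hrq) Hr2).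
      * pose proof (code_at_fun _ _ _ _ Hr Hrq) as E. apply pair_inj in E. destruct E; subst r2.
        eapply lt_irr; eauto.
      * apply (lt_asym r2 r Hr2r). exact (record_code_mono a x n m q r r2 b bq Hx Hl Hqm Hq Hr Hrq).
Qed.

Lemma record_code_kb a a' x x' : mem A a Da -> mem A a' Da -> mem A (pair A a a') Ra ->
  rcode a x -> rcode a' x' -> kb_lt A x x'.
Proof.
  intros Ha Ha' Haa' Hx Hx'.
  pose proof Hx as [n [Hl [Hent [_ Hcov]]]]. pose proof Hx' as [n' [Hl' _]].
  destruct (records_split a a' Ha Ha' Haa') as [t [Hta [Hta' Hsplit]]].
  destruct (Hcov t Hta) as [it [bt [Hit Hbt]]].
  pose proof (record_codes_agree a a' x n x' n' t it bt Hx Hl Hx' Hl' Hsplit Hit Hbt) as HC.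
  assert (Hag : forall j v, j ≺ it -> code_at A x' j v -> code_at A x j v).
  { intros j v Hj. apply (code_at_sym x' x j); [exists n; auto|]. apply HC, Hj. }
  exists n, n'. refine (conj Hl (conj Hl' _)).
  destruct (lt_tri it n') as [Hitn|[<-|Hitn]].
  - right. destruct (record_code_at a' x' n' it Hx' Hl' Hitn) as [r' [b' [Hr' [Hb' Hrr']]]].
    destruct (Hent it _ Hit Hbt) as [r0 [b0 [E [Hb0 _]]]].
    apply pair_inj in E. destruct E; subst r0 b0. rewrite (Fb_fun _ _ _ Hb0 Hb') in Hbt.
    assert (Htr : t ≺ r').
    { destruct (lt_tri t r') as [H|[<-|H]]; [exact H | tauto | exfalso].
      destruct (Hcov r' (proj2 (Hsplit r' H) Hrr')) as [q [bq [Hq Hrq]]].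
      destruct (lt_tri q it) as [Hqi|[->|Hqi]].
      - destruct (HC q Hqi) as [_ Hag2]. apply (lt_irr r').
        exact (record_code_mono a' x' n' q it r' r' bq b' Hx' Hl' Hqi Hitn (Hag2 _ Hrq) Hr').
      - pose proof (code_at_fun _ _ _ _ Hbt Hrq) as E. apply pair_inj in E. destruct E; subst r'.
        eapply lt_irr; eauto.
      - apply (lt_asym _ _ H). exact (record_code_mono a x n it q t r' b' bq Hx Hl Hqi Hq Hbt Hrq). }
    exists it. refine (conj Hit (conj Hitn (conj Hag _))).
    exists (pair A t b'), (pair A r' b'). refine (conj Hbt (conj Hr' _)). apply pair_mono_l, Htr.
  - left. exact (conj Hit Hag).
  - exfalso. destruct (HC n' Hitn) as [H _]. eapply lt_irr; eauto.
Qed.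

Lemma least_record_code_node a x : mem A a Da -> rcode a x ->
  (forall x', x' ≺ x -> ~ rcode a x') -> node x.
Proof.
  intros Ha Hx Hmin. pose proof Hx as [n [Hl [Hent [Hinc Hcov]]]].
  split; [split; [exists n; auto|]|].
  { intros y Hy Hs. apply (Hmin y Hy). eapply record_code_eqv; eauto. }
  exists n. split; auto. split; [|split].
  - destruct (Hcov a (record_self a Ha)) as [i [b [Hi _]]]. eapply le_lt_trans; [apply le_0 | apply Hi].
  - intros i v Hi Hv. destruct (Hent i v Hi Hv) as [r [b [-> [Hb [Hr _]]]]].
    exists r, b. split; auto. split; auto. eapply Fb_in; eauto.
  - intros i v w Hi Hv Hw.
    assert (Hi' : i ≺ n) by (eapply lt_trans; [apply lt_S | apply Hi]).
    destruct (Hent i v Hi' Hv) as [r [b [-> [Hb Hr]]]].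
    destruct (Hent _ w Hi Hw) as [r' [b' [-> [Hb' Hr']]]].
    destruct (Hinc i _ _ Hi Hv Hw) as [r1 [b1 [r2 [b2 [E1 [E2 Hrr]]]]]].
    apply pair_inj in E1. apply pair_inj in E2. destruct E1, E2; subst r1 b1 r2 b2.
    exists r, b, r', b'. split; auto. split; auto. split.
    + destruct Hr' as [_ [_ H]]. apply H; auto; apply Hr.
    + eapply Fb_desc; eauto.
Qed.

(* Each [a] goes to the least code of its records, which is canonical. *)
Lemma disj_embedding : Embedding A Da Ra Dd Rd.
Proof.
  destruct (pair_comprehension (fun A a x (e : nat -> Mc A) (s : nat -> Sc A) =>
     mem A a (s 0) /\ record_code A (s 0) (s 1) (s 2) a x /\
     forall x', lt A x' x -> ~ record_code A (s 0) (s 1) (s 2) a x')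
     ltac:(solve_definable) (env []) (senv [Da; Ra; Fb])) as [FE HFE].
  unfold_env.
  exists FE. split; [|split].
  - intros a Ha. destruct (record_code_ex a Ha) as [x0 Hx0].
    destruct (least_number (fun A x (e : nat -> Mc A) (s : nat -> Sc A) =>
       record_code A (s 0) (s 1) (s 2) (e 0) x)
       ltac:(solve_definable) (env [a]) (senv [Da; Ra; Fb])) as [x [Hx Hmin]];
      [exists x0; auto|].
    unfold_env. exists x. split; [apply HFE; auto|]. apply Dd_def. eapply least_record_code_node; eauto.
  - intros a y y' Ha H1 H2. apply HFE in H1. apply HFE in H2.
    destruct H1 as [_ [H1 M1]]. destruct H2 as [_ [H2 M2]].
    destruct (lt_tri y y') as [H|[H|H]]; [exfalso; exact (M2 y H H1) | exact H | exfalso; exact (M1 y' H H2)].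
  - intros a a' y y' Ha Ha' H1 H2 Haa. apply HFE in H1. apply HFE in H2.
    destruct H1 as [_ [H1 M1]]. destruct H2 as [_ [H2 M2]].
    apply (Rd_pair y y').
    refine (conj (least_record_code_node a y Ha H1 M1) (conj (least_record_code_node a' y' Ha' H2 M2) _)).
    exact (record_code_kb a a' y y' Ha Ha' Haa H1 H2).
Qed.

End Embed.
End Disj.
End Model.

Lemma disj_node_definable : Definable (fun A e s => disj_node A (s 0) (s 1) (s 2) (s 3) (e 0)).
Proof. solve_definable. Qed.

Lemma disj_rel_definable : Definable (fun A e s => disj_rel A (s 0) (s 1) (s 2) (s 3) (e 0)).
Proof. solve_definable. Qed.

Theorem lemma5p1 :
  exists thD thR : formula,
    arithmetical thD /\ arithmetical thR /\
    forall (A : L2str), ACA0 A ->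
    forall Da Ra Db Rb : Sc A,
      IsLO A Da Ra -> IsLO A Db Rb ->
      forall Dd Rd : Sc A,
        defines A thD Da Ra Db Rb Dd ->
        defines A thR Da Ra Db Rb Rd ->
        IsLO A Dd Rd /\
        (WO A Dd Rd <-> (WO A Da Ra \/ WO A Db Rb)) /\
        (DescSeq A Db Rb -> Embedding A Da Ra Dd Rd).
Proof.
  destruct disj_node_definable as [thD [arD HD]].
  destruct disj_rel_definable as [thR [arR HR]].
  exists thD, thR. split; [exact arD|]. split; [exact arR|].
  intros A HA Da Ra Db Rb Da_LO Db_LO Dd Rd Hdd Hdr.
  assert (Dd_def : forall x, mem A x Dd <-> disj_node A Da Ra Db Rb x).
  { intro x. rewrite (Hdd x). symmetry. apply (HD A (fun _ => x) (params A Da Ra Db Rb)). }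
  assert (Rd_def : forall z, mem A z Rd <-> disj_rel A Da Ra Db Rb z).
  { intro z. rewrite (Hdr z). symmetry. apply (HR A (fun _ => z) (params A Da Ra Db Rb)). }
  pose proof (disj_LO A HA Da Da Ra Db Rb Dd Rd Dd_def Rd_def) as Dd_LO.
  assert (Hemb : DescSeq A Db Rb -> Embedding A Da Ra Dd Rd).
  { intros [Fb [Fb_total [Fb_fun Fb_desc]]].
    exact (disj_embedding A HA Da Da Ra Db Rb Dd Rd Dd_def Rd_def Da_LO Fb Fb_total Fb_fun Fb_desc). }
  split; [exact Dd_LO|]. split; [|exact Hemb]. split.
  - intros [_ Hno]. destruct (classic (DescSeq A Da Ra)) as [Ha|Ha]; [|left; split; auto].
    destruct (classic (DescSeq A Db Rb)) as [Hb|Hb]; [|right; split; auto].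
    exfalso. exact (Hno (desc_seq_embedding A HA Da Da Ra Dd Rd Ha (Hemb Hb))).
  - intros Hwo. split; [exact Dd_LO|]. intros [F [F_total [F_fun F_desc]]].
    destruct (path_desc_seqs A HA Da Da Ra Db Rb Dd Rd Dd_def Rd_def F F_total F_fun F_desc)
      as [Ha Hb].
    destruct Hwo as [[_ H]|[_ H]]; auto.
Qed.
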